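(* For every second-order sentence $\psi$ there is a sentence $\phi$ of BID-logic such that for every suitable structure $M$, $M\models\psi$ if and only if $M\models_{\{\emptyset\}}\phi$.
   Context: Fix a first-order signature; structures have non-empty domains. An assignment on $M$ is a function from a finite set of variables into the domain of $M$; $s(a/x)$ agrees with $s$ except that it sends $x$ to $a$. A team $X$ of $M$ is a set of assignments all with the same domain $dom(X)$. For $F:X\to M$, $X(F/x)=\{s(F(s)/x):s\in X\}$; $X(M/x)=\{s(a/x):a\in M,s\in X\}$. Formulas of BID-logic: $\phi::=\alpha\mid=\!\!(t_1,\dots,t_n)\mid\neg=\!\!(t_1,\dots,t_n)\mid\bot\mid\phi\wedge\phi\mid\phi\otimes\phi\mid\phi\veebar\phi\mid\phi\to\phi\mid\phi\multimap\phi\mid\forall x\phi\mid\exists x\phi$, where $\alpha$ is a first-order literal (atomic or negated atomic formula) and $t_i$ are terms; $Fv(=\!\!(t_1,\dots,t_n))$ is the set of variables in $t_1,\dots,t_n$, otherwise free variables as usual; sentences have no free variables. Semantics for teams $X$ with $dom(X)\supseteq$ free variables: $M\models_X\alpha$ iff $M\models_s\alpha$ for all $s\in X$; $M\models_X=\!\!(t_1,\dots,t_n)$ iff for all $s,s'\in X$ with $s(t_i)=s'(t_i)$ for all $i<n$ we have $s(t_n)=s'(t_n)$; $M\models_X\neg=\!\!(t_1,\dots,t_n)$ iff $X=\emptyset$; $M\models_X\bot$ iff $X=\emptyset$; $\wedge$ as usual; $M\models_X\phi\otimes\psi$ iff $X=Y\cup Z$ for some $Y,Z\subseteq X$ with $M\models_Y\phi$,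 $M\models_Z\psi$; $M\models_X\phi\veebar\psi$ iff $M\models_X\phi$ or $M\models_X\psi$; $M\models_X\phi\to\psi$ iff for all $Y\subseteq X$, $M\models_Y\phi$ implies $M\models_Y\psi$; $M\models_X\phi\multimap\psi$ iff for every team $Y$ with $dom(Y)=dom(X)$, $M\models_Y\phi$ implies $M\models_{X\cup Y}\psi$; $M\models_X\exists x\phi$ iff $M\models_{X(F/x)}\phi$ for some $F:X\to M$; $M\models_X\forall x\phi$ iff $M\models_{X(M/x)}\phi$. $M\models_{\{\emptyset\}}\phi$ means the team consisting only of the empty assignment satisfies $\phi$. $M\models\psi$ is standard second-order semantics. *)

From mathcomp Require Import all_boot.
From Stdlib Require Import List.

Unset Printing Implicit Defensive.

Record signature := Signature {
  fsym : Type;               (* function symbols (constants = arity 0) *)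
  farity : fsym -> nat;
  rsym : Type;
  rarity : rsym -> nat }.
Arguments farity {s}.
Arguments rarity {s}.

(* A structure of the signature; the domain is non-empty (witness [pt]). *)
Record structure (S : signature) := Structure {
  carrier :> Type;
  pt : carrier;
  funI : forall f : fsym S, ('I_(farity f) -> carrier) -> carrier;
  relI : forall r : rsym S, ('I_(rarity r) -> carrier) -> Prop }.
Arguments carrier {S}.
Arguments pt {S}.
Arguments funI {S}.
Arguments relI {S}.

Inductive term (S : signature) : Type :=
  | Var : nat -> term S
  | Fn : forall f : fsym S, ('I_(farity f) -> term S) -> term S.
Arguments Var {S}.
Arguments Fn {S}.

Fixpoint occurs_t S (x : nat) (t : term S) : Prop :=
  match t with
  | Var y => x = y
  | Fn _ args => exists i, @occurs_t S x (args i)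
  end.

Arguments occurs_t {S}.

Fixpoint teval S (M : structure S) (rho : nat -> M) (t : term S) : M :=
  match t with
  | Var x => rho x
  | Fn f args => funI M f (fun i => @teval S M rho (args i))
  end.

Arguments teval {S}.

Inductive atom (S : signature) : Type :=
  | AEq : term S -> term S -> atom S
  | ARel : forall r : rsym S, ('I_(rarity r) -> term S) -> atom S.
Arguments AEq {S}.
Arguments ARel {S}.

Inductive literal (S : signature) : Type :=
  | LPos : atom S -> literal S
  | LNeg : atom S -> literal S.

Arguments LPos {S}.
Arguments LNeg {S}.

Definition atom_sat S (M : structure S) (rho : nat -> M) (a : atom S) : Prop :=
  match a with
  | AEq t u => teval M rho t = teval M rho u
  | ARel r args => relI M r (fun i => teval M rho (args i))
  end.

Arguments atom_sat {S}.

Definition lit_sat S (M : structure S) (rho : nat -> M) (l : literal S) : Prop :=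
  match l with
  | LPos a => atom_sat M rho a
  | LNeg a => ~ atom_sat M rho a
  end.

Arguments lit_sat {S}.

Definition occurs_a S (x : nat) (a : atom S) : Prop :=
  match a with
  | AEq t u => occurs_t x t \/ occurs_t x u
  | ARel _ args => exists i, occurs_t x (args i)
  end.

Arguments occurs_a {S}.

Definition occurs_l S (x : nat) (l : literal S) : Prop :=
  match l with LPos a => occurs_a x a | LNeg a => occurs_a x a end.

(* [BDep ts t] is the dependence atom =(t_1,...,t_{n-1}, t_n) with
   ts = [t_1;...;t_{n-1}] and t = t_n. *)
Arguments occurs_l {S}.

Inductive bid (S : signature) : Type :=
  | BLit : literal S -> bid S
  | BDep : list (term S) -> term S -> bid S
  | BNDep : list (term S) -> term S -> bid S
  | BBot : bid S
  | BAnd : bid S -> bid S -> bid S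
  | BTensor : bid S -> bid S -> bid S
  | BVee : bid S -> bid S -> bid S
  | BImp : bid S -> bid S -> bid S
  | BLolli : bid S -> bid S -> bid S
  | BAll : nat -> bid S -> bid S
  | BEx : nat -> bid S -> bid S.

Arguments BLit {S}.
Arguments BDep {S}.
Arguments BNDep {S}.
Arguments BBot {S}.
Arguments BAnd {S}.
Arguments BTensor {S}.
Arguments BVee {S}.
Arguments BImp {S}.
Arguments BLolli {S}.
Arguments BAll {S}.
Arguments BEx {S}.

Fixpoint bid_free S (x : nat) (phi : bid S) : Prop :=
  match phi with
  | BLit l => occurs_l x l
  | BDep ts t | BNDep ts t => (exists u, In u ts /\ occurs_t x u) \/ occurs_t x t
  | BBot => False
  | BAnd p q | BTensor p q | BVee p q | BImp p q | BLolli p q =>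
      @bid_free S x p \/ @bid_free S x q
  | BAll y p | BEx y p => x <> y /\ @bid_free S x p
  end.

Arguments bid_free {S}.

Definition bid_sentence S (phi : bid S) : Prop := forall x, ~ bid_free x phi.

(** Assignments: finite partial maps from variables into the domain,
    represented as [nat -> option M]; a team with domain [V] (a finite set
    of variables, given as a list) is a set of assignments each of which has
    domain exactly [V]. *)
Arguments bid_sentence {S}.

Definition asg (D : Type) := nat -> option D.

Definition has_dom D (V : list nat) (s : asg D) : Prop :=
  forall x, s x <> None <-> In x V.

Arguments has_dom {D}.

Definition team D := asg D -> Prop.

Definition team_on D (V : list nat) (X : team D) : Prop :=
  forall s, X s -> has_dom V s.

Arguments team_on {D}.

Definition upd D (s : asg D) (x : nat) (a : D) : asg D :=
  fun y => if Nat.eqb y x then Some a else s y.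

(* value of an assignment as a total valuation (default [pt] outside the
   domain; only used on variables of the domain). *)
Arguments upd {D}.

Definition val S (M : structure S) (s : asg M) : nat -> M :=
  fun x => match s x with Some a => a | None => pt M end.

Arguments val {S}.

Definition tv S (M : structure S) (s : asg M) (t : term S) : M :=
  teval M (val M s) t.

Arguments tv {S}.

Fixpoint bsat S (M : structure S) (V : list nat) (X : team M) (phi : bid S)
  {struct phi} : Prop :=
  match phi with
  | BLit l => forall s, X s -> lit_sat M (val M s) l
  | BDep ts t => forall s s', X s -> X s' ->
      (forall u, In u ts -> tv M s u = tv M s' u) -> tv M s t = tv M s' t
  | BNDep _ _ => forall s, ~ X s
  | BBot => forall s, ~ X s
  | BAnd p q => @bsat S M V X p /\ @bsat S M V X q
  | BTensor p q => exists Y Z : team M,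
      (forall s, X s <-> (Y s \/ Z s)) /\ @bsat S M V Y p /\ @bsat S M V Z q
  | BVee p q => @bsat S M V X p \/ @bsat S M V X q
  | BImp p q => forall Y : team M, (forall s, Y s -> X s) ->
      @bsat S M V Y p -> @bsat S M V Y q
  | BLolli p q => forall Y : team M, team_on V Y ->
      @bsat S M V Y p -> @bsat S M V (fun s => X s \/ Y s) q
  | BAll x p =>
      @bsat S M (x :: V) (fun s' => exists s a, X s /\ s' = upd s x a) p
  | BEx x p => exists F : asg M -> M,
      @bsat S M (x :: V) (fun s' => exists s, X s /\ s' = upd s x (F s)) p
  end.

Arguments bsat {S}.

Definition empty_team D : team D := fun s => s = (fun _ => None).


Definition bid_models S (M : structure S) (phi : bid S) : Prop :=
  bsat M nil (empty_team M) phi.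

Arguments bid_models {S}.

Inductive so (S : signature) : Type :=
  | SAtom : atom S -> so S
  | SRVar : nat -> forall n : nat, ('I_n -> term S) -> so S
  | SNot : so S -> so S
  | SAnd : so S -> so S -> so S
  | SOr : so S -> so S -> so S
  | SEx : nat -> so S -> so S
  | SAll : nat -> so S -> so S
  | SExR : nat -> nat -> so S -> so S
  | SAllR : nat -> nat -> so S -> so S.

Arguments SAtom {S}.
Arguments SRVar {S}.
Arguments SNot {S}.
Arguments SAnd {S}.
Arguments SOr {S}.
Arguments SEx {S}.
Arguments SAll {S}.
Arguments SExR {S}.
Arguments SAllR {S}.

Fixpoint so_free S (x : nat) (psi : so S) : Prop :=
  match psi with
  | SAtom a => occurs_a x a
  | SRVar _ _ args => exists i, occurs_t x (args i)
  | SNot p => @so_free S x p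
  | SAnd p q | SOr p q => @so_free S x p \/ @so_free S x q
  | SEx y p | SAll y p => x <> y /\ @so_free S x p
  | SExR _ _ p | SAllR _ _ p => @so_free S x p
  end.

Arguments so_free {S}.

Fixpoint so_rfree S (i n : nat) (psi : so S) : Prop :=
  match psi with
  | SAtom _ => False
  | SRVar j m _ => i = j /\ n = m
  | SNot p => @so_rfree S i n p
  | SAnd p q | SOr p q => @so_rfree S i n p \/ @so_rfree S i n q
  | SEx _ p | SAll _ p => @so_rfree S i n p
  | SExR j m p | SAllR j m p => ~ (i = j /\ n = m) /\ @so_rfree S i n p
  end.

Arguments so_rfree {S}.

Definition so_sentence S (psi : so S) : Prop :=
  (forall x, ~ so_free x psi) /\ (forall i n, ~ so_rfree i n psi).

(* Relation environment: variable (i, n) denotes a set of n-tuples,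
   represented as a predicate on sequences (only sequences of length n
   are ever tested). *)
Arguments so_sentence {S}.

Definition renv (D : Type) := nat -> nat -> (list D -> Prop).

Definition fupd D (rho : nat -> D) (x : nat) (a : D) : nat -> D :=
  fun y => if Nat.eqb y x then a else rho y.

Arguments fupd {D}.

Definition rupd D (G : renv D) (i n : nat) (P : list D -> Prop) : renv D :=
  fun j m => if Nat.eqb j i && Nat.eqb m n then P else G j m.

Arguments rupd {D}.

Fixpoint ssat S (M : structure S) (rho : nat -> M) (G : renv M) (psi : so S)
  {struct psi} : Prop :=
  match psi with
  | SAtom a => atom_sat M rho a
  | SRVar i n args => G i n [seq teval M rho (args k) | k <- enum 'I_n]
  | SNot p => ~ @ssat S M rho G p
  | SAnd p q => @ssat S M rho G p /\ @ssat S M rho G q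
  | SOr p q => @ssat S M rho G p \/ @ssat S M rho G q
  | SEx x p => exists a : M, @ssat S M (fupd rho x a) G p
  | SAll x p => forall a : M, @ssat S M (fupd rho x a) G p
  | SExR i n p => exists P : list M -> Prop, @ssat S M rho (rupd G i n P) p
  | SAllR i n p => forall P : list M -> Prop, @ssat S M rho (rupd G i n P) p
  end.

(* M |= psi for a sentence psi (the environments are irrelevant). *)
Arguments ssat {S}.

Definition so_models S (M : structure S) (psi : so S) : Prop :=
  ssat M (fun _ => pt M) (fun _ _ _ => False) psi.

Arguments so_models {S}.

(* The translation follows the second-order formula, with negations pushed
   inward.  A team encodes at each of its assignments an environment for the
   formula: first-order variables are read off the assignment, and a relation
   variable of arity n is coded by n tuple variables ys and a code variable b, a
   tuple being in the relation iff b equals a designated variable c, which is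
   universally quantified and so takes every value.  Quantifying ys universally
   and choosing b under the dependence atom =(real, ys, b), where real lists the
   variables in scope, realises an arbitrary relation uniformly on each class of
   assignments; a universal second-order quantifier becomes an intuitionistic
   implication from the same dependence atom, whose antecedent ranges over all
   such choices.  A disjunction splits the team according to a fresh variable,
   chosen under =(real, k), that equals c or not.  All of this needs two
   elements; the sentence itself detects a one-element structure and then uses
   constant relations instead. *)

From Pilot Require Import Defs.
From mathcomp Require Import all_boot zify.
From Stdlib Require Import List Arith Lia.
From Stdlib Require Import Classical ClassicalEpsilon FunctionalExtensionality PropExtensionality.

Set Bullet Behavior "Strict Subproofs".

Lemma In_mem (T : eqType) (x : T) (s : list T) : In x s <-> x \in s.
Proof.
  elim: s => [|y s IH] /=; first by [].
  rewrite seq.in_cons.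
  by split=> [[->|/IH ->]|/orP [/eqP ->|/IH]]; rewrite ?eqxx ?orbT; auto.
Qed.

(** * Coincidence for second-order semantics *)

Section Coincidence.
Variables (S : signature) (M : structure S).

Lemma teval_ext (t : term S) (rho rho' : nat -> M) :
  (forall x, occurs_t x t -> rho x = rho' x) -> teval M rho t = teval M rho' t.
Proof.
  induction t as [y|f args IH]; simpl; intros H.
  - by apply H.
  - f_equal; apply functional_extensionality => i.
    apply IH => x Hx; apply H; by exists i.
Qed.

Lemma fupd_ext (rho rho' : nat -> M) x a (P : nat -> Prop) :
  (forall y, y <> x /\ P y -> rho y = rho' y) ->
  forall y, P y -> fupd rho x a y = fupd rho' x a y.
Proof.
  move=> H y Hy; rewrite /fupd; case: (Nat.eqb_spec y x) => [//|Hyx].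
  by apply H.
Qed.

Lemma rupd_ext (G G' : renv M) i n P :
  (forall j m l, size l = m -> (G j m l <-> G' j m l)) ->
  forall j m l, size l = m -> (rupd G i n P j m l <-> rupd G' i n P j m l).
Proof. by move=> H j m l Hl; rewrite /rupd; case: (_ && _); [|apply H]. Qed.

(* Relation variables are only ever applied to tuples of their own arity. *)
Lemma ssat_ext (psi : so S) : forall rho rho' G G',
  (forall x, so_free x psi -> rho x = rho' x) ->
  (forall i n l, size l = n -> (G i n l <-> G' i n l)) ->
  (ssat M rho G psi <-> ssat M rho' G' psi).
Proof.
  induction psi as [a|i n args|p IH|p IHp q IHq|p IHp q IHq|x p IH|x p IH|i n p IH|i n p IH];
    intros rho rho' G G' Hr HG; simpl in *.
  - destruct a as [t u|r args]; simpl in *.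
    + rewrite (teval_ext t rho rho') ?(teval_ext u rho rho'); [tauto| |];
        intros; apply Hr; tauto.
    + have -> : (fun i => teval M rho (args i)) = (fun i => teval M rho' (args i)); [|tauto].
      apply functional_extensionality => i; apply teval_ext => x Hx; apply Hr; eauto.
  - have -> : [seq teval M rho (args k) | k <- enum 'I_n] =
              [seq teval M rho' (args k) | k <- enum 'I_n].
      by apply eq_map => k; apply teval_ext => x Hx; apply Hr; eauto.
    by apply HG; rewrite size_map size_enum_ord.
  - by rewrite (IH rho rho' G G').
  - by rewrite (IHp rho rho' G G') ?(IHq rho rho' G G'); auto.
  - by rewrite (IHp rho rho' G G') ?(IHq rho rho' G G'); auto.
  - have E a : ssat M (fupd rho x a) G p <-> ssat M (fupd rho' x a) G' p
      by apply IH => //; apply: fupd_ext.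
    by split=> -[a Ha]; exists a; [apply/E|apply/E].
  - have E a : ssat M (fupd rho x a) G p <-> ssat M (fupd rho' x a) G' p
      by apply IH => //; apply: fupd_ext.
    by split=> Ha a; [apply/E|apply/E].
  - have E P : ssat M rho (rupd G i n P) p <-> ssat M rho' (rupd G' i n P) p
      by apply IH => //; apply: rupd_ext.
    by split=> -[P HP]; exists P; [apply/E|apply/E].
  - have E P : ssat M rho (rupd G i n P) p <-> ssat M rho' (rupd G' i n P) p
      by apply IH => //; apply: rupd_ext.
    by split=> HP P; [apply/E|apply/E].
Qed.

End Coincidence.

(** * The translation *)

(* A relation variable is represented either by a truth value (in a one-element
   structure every relation is empty or full) or by tuple variables [ys] and a
   code variable [b]: a tuple [ys] is in the relation iff [b = c], where [c] is
   the designated variable of the translation. *)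
Inductive relrep := RConst (b : bool) | RCode (ys : list nat) (b : nat).

Section Translation.
Context {S : signature}.

Fixpoint tren (sg : nat -> nat) (t : term S) : term S :=
  match t with
  | Var x => Var (sg x)
  | Fn f args => Fn f (fun i => tren sg (args i))
  end.

Definition aren sg (a : atom S) : atom S :=
  match a with
  | AEq t u => AEq (tren sg t) (tren sg u)
  | ARel r args => ARel r (fun i => tren sg (args i))
  end.

Definition btrue : bid S := BImp BBot BBot.

Fixpoint ball_list (ys : list nat) (p : bid S) : bid S :=
  if ys is y :: ys then BAll y (ball_list ys p) else p.

Definition bconj (ls : list (literal S)) : bid S :=
  foldr (fun l acc => BAnd (BLit l) acc) btrue ls.

Definition bdep (xs : list nat) (y : nat) : bid S := BDep (List.map (@Var S) xs) (Var y).
Definition veq (x y : nat) : atom S := AEq (Var x) (Var y).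
Definition lit_pol (pol : bool) (a : atom S) : literal S := if pol then LPos a else LNeg a.

Definition env_upd (sg : nat -> nat) x v := fun y => if Nat.eqb y x then v else sg y.
Definition rep_upd (tau : nat -> nat -> relrep) i n r :=
  fun j m => if Nat.eqb j i && Nat.eqb m n then r else tau j m.

Definition bex_dep real k (A : bid S) : bid S := BEx k (BAnd (bdep real k) A).

Definition bsplit c real k (A B : bid S) : bid S :=
  bex_dep real k (BTensor (BAnd (BLit (LPos (veq k c))) A) (BAnd (BLit (LNeg (veq k c))) B)).

Definition bor (big : bool) c real k (Ab Bb As Bs : bid S) : bid S :=
  if big then bsplit c real k Ab Bb else BVee As Bs.

Definition bexR (big : bool) real k n (Fb Ft Ff : bid S) : bid S :=
  if big then ball_list (iota k n) (bex_dep (List.app real (iota k n)) (k + n) Fb)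
  else BVee Ft Ff.

Definition ballR (big : bool) real k n (Fb Ft Ff : bid S) : bid S :=
  if big then ball_list (iota k n) (BAll (k + n) (BImp (bdep (List.app real (iota k n)) (k + n)) Fb))
  else BAnd Ft Ff.

(* [R(args)] becomes: whenever [ys] equals [args], the code [b] is [c]. *)
Definition rel_query c sg (ys : list nat) b n (args : 'I_n -> term S) pol : bid S :=
  BImp (bconj [seq LPos (AEq (Var (seq.nth 0 ys j)) (tren sg (args j))) | j : 'I_n <- enum 'I_n])
       (BLit (lit_pol pol (veq b c))).

(* [translate big c real sg tau k pol psi] translates [psi] (negated when [pol]
   is false); [big] tells whether the structure has two elements, [real] lists
   the variables a choice may depend on, [sg] and [tau] place the first- and
   second-order variables of [psi], and [k] is the next fresh variable. *)
Fixpoint translate (big : bool) (c : nat) (real : list nat) (sg : nat -> nat)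
  (tau : nat -> nat -> relrep) (k : nat) (pol : bool) (psi : so S) {struct psi} : bid S :=
  match psi with
  | SAtom a => BLit (lit_pol pol (aren sg a))
  | SRVar i n args =>
      match tau i n with
      | RConst b => if Bool.eqb b pol then btrue else BBot
      | RCode ys b => rel_query c sg ys b n args pol
      end
  | SNot p => translate big c real sg tau k (negb pol) p
  | SAnd p q =>
      if pol then BAnd (translate big c real sg tau k pol p) (translate big c real sg tau k pol q)
      else bor big c real k
             (translate big c (k :: real) sg tau k.+1 pol p) (translate big c (k :: real) sg tau k.+1 pol q)
             (translate big c real sg tau k pol p) (translate big c real sg tau k pol q)
  | SOr p q =>
      if pol then bor big c real k
             (translate big c (k :: real) sg tau k.+1 pol p) (translate big c (k :: real) sg tau k.+1 pol q)
             (translate big c real sg tau k pol p) (translate big c real sg tau k pol q)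
      else BAnd (translate big c real sg tau k pol p) (translate big c real sg tau k pol q)
  | SEx x p =>
      if pol then bex_dep real k (translate big c (k :: real) (env_upd sg x k) tau k.+1 pol p)
      else BAll k (translate big c (k :: real) (env_upd sg x k) tau k.+1 pol p)
  | SAll x p =>
      if pol then BAll k (translate big c (k :: real) (env_upd sg x k) tau k.+1 pol p)
      else bex_dep real k (translate big c (k :: real) (env_upd sg x k) tau k.+1 pol p)
  | SExR i n p =>
      (if pol then bexR else ballR) big real k n
        (translate big c real sg (rep_upd tau i n (RCode (iota k n) (k + n))) (k + n).+1 pol p)
        (translate big c real sg (rep_upd tau i n (RConst true)) k pol p)
        (translate big c real sg (rep_upd tau i n (RConst false)) k pol p)
  | SAllR i n p =>
      (if pol then ballR else bexR) big real k n
        (translate big c real sg (rep_upd tau i n (RCode (iota k n) (k + n))) (k + n).+1 pol p)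
        (translate big c real sg (rep_upd tau i n (RConst true)) k pol p)
        (translate big c real sg (rep_upd tau i n (RConst false)) k pol p)
  end.

Definition bsingleton : bid S := BAll 3 (BAll 4 (BLit (LPos (veq 3 4)))).

(* The designated variable [c = 2] ranges over the whole domain and the fresh
   variables start at 3. *)
Definition translate_top (big : bool) (psi : so S) : bid S :=
  translate big 2 [:: 2] (fun _ => 2) (fun _ _ => RConst false) 3 true psi.

(* On a nonempty team, [bsingleton] says that the domain has a single element and
   [bsingleton -> bot] that it has two. *)
Definition bid_of_so (psi : so S) : bid S :=
  BAll 2 (BVee (BAnd bsingleton (translate_top false psi))
               (BAnd (BImp bsingleton BBot) (translate_top true psi))).

End Translation.

(** * Free variables *)

Section FreeVariables.
Variable S : signature.

Lemma tren_free sg (t : term S) y : occurs_t y (tren sg t) -> exists x, sg x = y.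
Proof. elim: t => [x /= ->|f args IH [i /IH]]; eauto. Qed.

Lemma ball_list_free ys (p : bid S) y :
  bid_free y (ball_list ys p) -> ~ In y ys /\ bid_free y p.
Proof.
  elim: ys => [|z ys IH] /=; first tauto.
  move=> [Hyz /IH [Hys Hp]]; split=> // -[Ezy|]; by [apply: Hyz|].
Qed.

Lemma bconj_free (ls : list (literal S)) y :
  bid_free y (bconj ls) -> exists l, In l ls /\ occurs_l y l.
Proof.
  elim: ls => [|l ls IH] /=; first tauto.
  by move=> [H|/IH [l' [? ?]]]; eauto.
Qed.

Lemma map_Var_free (xs : list nat) y :
  (exists u : term S, In u (List.map Var xs) /\ occurs_t y u) -> In y xs.
Proof. by move=> [u [/in_map_iff [x [<- Hx]] /= ->]]. Qed.

Lemma bdep_free xs k y : bid_free y (@bdep S xs k) -> In y xs \/ y = k.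
Proof. by move=> /= [/map_Var_free|]; auto. Qed.

Lemma bex_dep_free real k (A : bid S) y :
  bid_free y (bex_dep real k A) -> In y real \/ (y <> k /\ bid_free y A).
Proof. by move=> /= [Hyk [/bdep_free [|//]|]]; auto. Qed.

Lemma bsplit_free c real k (A B : bid S) y :
  bid_free y (bsplit c real k A B) ->
  y = c \/ In y real \/ (y <> k /\ (bid_free y A \/ bid_free y B)).
Proof.
  move=> /bex_dep_free [|[Hyk]] /=; first auto.
  by rewrite /veq /=; intuition.
Qed.

Definition codevar_free real k n (Fb : bid S) y :=
  In y real \/ (~ In y (iota k n) /\ y <> k + n /\ bid_free y Fb).

Lemma bexR_free big real k n (Fb Ft Ff : bid S) y :
  bid_free y (bexR big real k n Fb Ft Ff) ->
  codevar_free real k n Fb y \/ bid_free y Ft \/ bid_free y Ff.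
Proof.
  rewrite /codevar_free; case: big => /=; last tauto.
  move=> /ball_list_free [Hy H]; move: H => /bex_dep_free [H|]; last tauto.
  apply in_app_or in H; tauto.
Qed.

Lemma ballR_free big real k n (Fb Ft Ff : bid S) y :
  bid_free y (ballR big real k n Fb Ft Ff) ->
  codevar_free real k n Fb y \/ bid_free y Ft \/ bid_free y Ff.
Proof.
  rewrite /codevar_free; case: big => /=; last tauto.
  move=> /ball_list_free [Hy [Hyb [H|]]]; last tauto.
  apply bdep_free in H as [H|]; [apply in_app_or in H|]; tauto.
Qed.

Lemma In_nth (ys : list nat) j : j < size ys -> In (seq.nth 0 ys j) ys.
Proof.
  elim: ys j => [|z ys IH] [|j] //= Hj; first by left.
  by right; apply: IH.
Qed.

Lemma in_iota_lt k n y : In y (iota k n) -> k <= y < k + n.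
Proof. by elim: n k => [|n IH] k //= [<-|/IH]; lia. Qed.

Definition rep_wf (tau : nat -> nat -> relrep) :=
  forall i n ys b, tau i n = RCode ys b -> size ys = n.

Lemma rep_wf_code tau i n k : rep_wf tau -> rep_wf (rep_upd tau i n (RCode (iota k n) (k + n))).
Proof.
  rewrite /rep_upd => H j m ys b.
  case: (Nat.eqb_spec j i) => _ /=; last exact: H.
  by case: (Nat.eqb_spec m n) => [-> [<- _]|_]; [exact: size_iota|exact: H].
Qed.

Lemma rep_wf_const tau i n b0 : rep_wf tau -> rep_wf (rep_upd tau i n (RConst b0)).
Proof. by rewrite /rep_upd => H j m ys b; case: (_ && _); [|apply: H]. Qed.

(* The variables that a translation may leave free. *)
Definition ctx_var (c : nat) (real : list nat) (sg : nat -> nat) (tau : nat -> nat -> relrep) y :=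
  y = c \/ In y real \/ (exists x, sg x = y) \/
  (exists i n ys b, tau i n = RCode ys b /\ (In y ys \/ y = b)).

Lemma ctx_var_cons c real sg tau k y :
  ctx_var c (k :: real) sg tau y -> y <> k -> ctx_var c real sg tau y.
Proof. rewrite /ctx_var /=; intuition congruence. Qed.

Lemma ctx_var_env_upd c real sg tau k x y :
  ctx_var c (k :: real) (env_upd sg x k) tau y -> y <> k -> ctx_var c real sg tau y.
Proof.
  rewrite /ctx_var /env_upd /= => H Hy.
  case: H => [|[[|]|[[x' Hx]|]]]; auto; try congruence.
  by case: (Nat.eqb x' x) Hx => [|Hx]; [congruence|eauto].
Qed.

Lemma ctx_var_rep_code c real sg tau i n k y :
  ctx_var c real sg (rep_upd tau i n (RCode (iota k n) (k + n))) y ->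
  ~ In y (iota k n) -> y <> k + n -> ctx_var c real sg tau y.
Proof.
  rewrite /ctx_var /rep_upd => H H1 H2.
  case: H => [|[|[|[j [m [ys [b [E Hy]]]]]]]]; auto.
  case: (_ && _) E => [[Ey Eb]|E]; first by subst; tauto.
  by right; right; right; exists j, m, ys, b.
Qed.

Lemma ctx_var_codevar c real sg tau i n k (Fb : bid S) y :
  (forall y', bid_free y' Fb -> ctx_var c real sg (rep_upd tau i n (RCode (iota k n) (k + n))) y') ->
  codevar_free real k n Fb y -> ctx_var c real sg tau y.
Proof.
  move=> IH [|[H1 [H2 /IH H]]]; last exact: ctx_var_rep_code H H1 H2.
  by rewrite /ctx_var; auto.
Qed.

Lemma ctx_var_rep_const c real sg tau i n b0 y :
  ctx_var c real sg (rep_upd tau i n (RConst b0)) y -> ctx_var c real sg tau y.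
Proof.
  rewrite /ctx_var /rep_upd => H.
  case: H => [|[|[|[j [m [ys [b [E Hy]]]]]]]]; auto.
  case: (_ && _) E => [//|E].
  by right; right; right; exists j, m, ys, b.
Qed.

Lemma translate_free (psi : so S) big c real sg tau k pol y :
  rep_wf tau -> bid_free y (translate big c real sg tau k pol psi) -> ctx_var c real sg tau y.
Proof.
  elim: psi big real sg tau k pol y =>
      [a|i n args|p IH|p IHp q IHq|p IHp q IHq|x p IH|x p IH|i n p IH|i n p IH]
      big real sg tau k pol y WFt /=.
  - move=> H; right; right; left.
    by case: pol a H => -[t u|r args] /=; try case; move=> *; apply: tren_free; eassumption.
  - case E: (tau i n) => [b|ys b]; first by case: b E; case: pol => /=; tauto.
    move=> /= [/bconj_free [l [/in_map_iff [j [<- _]]] /= [/= ->|/tren_free]]|].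
    + right; right; right; exists i, n, ys, b; split=> //; left.
      by apply: In_nth; rewrite (WFt _ _ _ _ E).
    + by rewrite /ctx_var; auto.
    + case: pol => /= -[] /= ->; rewrite /ctx_var; auto.
      all: by right; right; right; exists i, n, ys, b; auto.
  - exact: IH.
  - case: pol => /=; first by case; [apply: IHp|apply: IHq].
    case: big => /=; last by case; [apply: IHp|apply: IHq].
    move=> /bsplit_free [->|[|[Hyk [/IHp|/IHq]]]]; rewrite /ctx_var; auto;
      by move=> H; apply: ctx_var_cons (H _) Hyk.
  - case: pol => /=; last by case; [apply: IHp|apply: IHq].
    case: big => /=; last by case; [apply: IHp|apply: IHq].
    move=> /bsplit_free [->|[|[Hyk [/IHp|/IHq]]]]; rewrite /ctx_var; auto;
      by move=> H; apply: ctx_var_cons (H _) Hyk.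
  - case: pol => /= [/bex_dep_free [|[Hyk]]|[Hyk]]; first by rewrite /ctx_var; auto.
    all: by move=> /IH H; apply: ctx_var_env_upd (H _) Hyk.
  - case: pol => /= [[Hyk]|/bex_dep_free [|[Hyk]]]; first 2 [by rewrite /ctx_var; auto].
    all: by move=> /IH H; apply: ctx_var_env_upd (H _) Hyk.
  - case: pol => /= [/bexR_free|/ballR_free] [|[|]].
    all: first [apply: ctx_var_codevar => y' Hy'; apply: IH Hy'; exact: rep_wf_code
               |by move=> /IH H; apply: ctx_var_rep_const (H _); apply: rep_wf_const].
  - case: pol => /= [/ballR_free|/bexR_free] [|[|]].
    all: first [apply: ctx_var_codevar => y' Hy'; apply: IH Hy'; exact: rep_wf_code
               |by move=> /IH H; apply: ctx_var_rep_const (H _); apply: rep_wf_const].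
Qed.

Lemma bid_of_so_sentence (psi : so S) : bid_sentence (bid_of_so psi).
Proof.
  have wf0 : rep_wf (fun _ _ => RConst false) by [].
  move=> y /= [Hy]; case=> [[Hs|H]|[[Hs|[]]|H]]; try by move: Hs => /=; lia.
  all: move: (translate_free _ _ _ _ _ _ _ _ _ wf0 H).
  all: rewrite /ctx_var /=; firstorder congruence.
Qed.

End FreeVariables.

(** * Team semantics *)

Section TeamSemantics.
Context {S : signature} (M : structure S).
Notation vl := (Defs.val M).

Definition agree_on (L : list nat) (r s : asg M) := forall v, In v L -> vl r v = vl s v.

Lemma agree_on_refl L r : agree_on L r r.
Proof. by []. Qed.

Lemma agree_on_sym L r s : agree_on L r s -> agree_on L s r.
Proof. by move=> H v /H. Qed.

Lemma agree_on_trans L r s t : agree_on L r s -> agree_on L s t -> agree_on L r t.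
Proof. by move=> H1 H2 v Hv; rewrite H1 ?H2. Qed.

Lemma agree_on_map L r s : agree_on L r s <-> seq.map (vl r) L = seq.map (vl s) L.
Proof.
  elim: L => [|v L IH] /=; first by split=> // _ v [].
  split.
  - move=> H; rewrite (H v (or_introl erefl)); congr cons.
    by apply/IH => u Hu; apply: H; right.
  - by move=> [Hv /IH HL] u [<-|Hu]; [exact: Hv|exact: HL].
Qed.

Lemma eq_team (X Y : team M) : (forall s, X s <-> Y s) -> X = Y.
Proof. by move=> H; apply: functional_extensionality => s; apply: propositional_extensionality. Qed.

Lemma val_upd s v a y : vl (upd s v a) y = if Nat.eqb y v then a else vl s y.
Proof. by rewrite /Defs.val /upd; case: (Nat.eqb y v). Qed.

Lemma val_upd_lt s k a v : v < k -> vl (upd s k a) v = vl s v.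
Proof. by move=> Hv; rewrite val_upd; case: (Nat.eqb_spec v k) => [E|//]; lia. Qed.

Lemma bconj_sat V Y ls :
  bsat M V Y (bconj ls) <-> forall s, Y s -> forall l, In l ls -> lit_sat M (vl s) l.
Proof.
  elim: ls => [|l ls IH] /=; first by split=> [_ s _ l []|_ Z _].
  rewrite IH; split=> [[H1 H2] s Hs l0 [<-|]|H]; eauto.
  by split=> [s Hs|s Hs l0 Hl0]; apply: H => //; [left|right].
Qed.

Lemma bimp_bconj_sat V X ls l :
  bsat M V X (BImp (bconj ls) (BLit l)) <->
  forall s, X s -> (forall l0, In l0 ls -> lit_sat M (vl s) l0) -> lit_sat M (vl s) l.
Proof.
  split=> /= [H s Hs Hl|H Y HY /bconj_sat Hc s Hs]; last by apply: H; auto.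
  apply: (H (fun r => r = s)) => //; first by move=> _ ->.
  by apply/bconj_sat => _ ->.
Qed.

Lemma bdep_sat V Y xs y :
  bsat M V Y (bdep xs y) <-> forall r r', Y r -> Y r' -> agree_on xs r r' -> vl r y = vl r' y.
Proof.
  rewrite /= /agree_on /tv; split=> H r r' Hr Hr' Ha; apply: H => // u.
  - by move=> /in_map_iff [x [<- Hx]] /=; apply: Ha.
  - by move=> Hu; apply: (Ha (Var u)); apply/in_map_iff; eauto.
Qed.

(* Formulas without [-o] are downward closed; an intuitionistic implication is
   downward closed whatever its arguments. *)
Fixpoint lolli_free (phi : bid S) : Prop :=
  match phi with
  | BLolli _ _ => False
  | BAnd p q | BTensor p q | BVee p q => lolli_free p /\ lolli_free q
  | BAll _ p | BEx _ p => lolli_free p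
  | _ => True
  end.

Lemma bsat_downward phi V X Y :
  lolli_free phi -> bsat M V X phi -> (forall s, Y s -> X s) -> bsat M V Y phi.
Proof.
  elim: phi V X Y => [l|ts t|ts t| |p IHp q IHq|p IHp q IHq|p IHp q IHq|p IHp q IHq|p IHp q IHq|x p IH|x p IH]
    V X Y /= HL H HY; try by [move=> s /HY /H | move=> s /HY; apply: H | eauto].
  - by case: HL H => ? ? [? ?]; split; [apply: IHp HY|apply: IHq HY].
  - case: HL H => HLp HLq [Y1 [Z1 [HU [H1 H2]]]].
    exists (fun s => Y s /\ Y1 s), (fun s => Y s /\ Z1 s); split; last first.
      by split; [apply: IHp H1 _ | apply: IHq H2 _] => // s [].
    by move=> s; split=> [Hs|]; [have := proj1 (HU s) (HY s Hs)|]; tauto.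
  - by case: HL H => ? ? [H|H]; [left; apply: IHp H _|right; apply: IHq H _].
  - apply: IH H _ => // s' [s [a [Hs ->]]]; exists s, a; auto.
  - case: H => F HF; exists F; apply: IH HF _ => // s' [s [Hs ->]]; exists s; auto.
Qed.

Fixpoint updl (s : asg M) (ys : list nat) (l : list M) : asg M :=
  match ys, l with
  | y :: ys, a :: l => updl (upd s y a) ys l
  | _, _ => s
  end.

Lemma updl_out ys s l v : ~ In v ys -> vl (updl s ys l) v = vl s v.
Proof.
  elim: ys s l => [|y ys IH] s [|a l] //= Hv.
  rewrite IH; last tauto.
  by rewrite val_upd; case: (Nat.eqb_spec v y) => // E; case: Hv; left.
Qed.

Lemma updl_map ys s l :
  NoDup ys -> size l = size ys -> seq.map (vl (updl s ys l)) ys = l.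
Proof.
  elim: ys s l => [|y ys IH] s [|a l] //= /NoDup_cons_iff [Hy Hys] [Hl].
  by rewrite IH // updl_out // val_upd Nat.eqb_refl.
Qed.

Lemma NoDup_iota k n : NoDup (iota k n).
Proof. by elim: n k => [|n IH] k /=; constructor => // /in_iota_lt; lia. Qed.

Definition team_ball_list (X : team M) (ys : list nat) : team M :=
  fun r => exists s l, X s /\ size l = size ys /\ r = updl s ys l.

Lemma bsat_ball_list ys V X (phi : bid S) :
  bsat M V X (ball_list ys phi) <-> bsat M (rev_append ys V) (team_ball_list X ys) phi.
Proof.
  elim: ys V X => [|y ys IH] V X /=.
  - suff -> : team_ball_list X [::] = X by [].
    by apply: eq_team => r; split=> [[s [l [Hs [_ ->]]]]|Hr] //; exists r, [::].
  - rewrite IH; suff -> : team_ball_list (fun s' => exists s a, X s /\ s' = upd s y a) ys =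
                           team_ball_list X (y :: ys) by [].
    apply: eq_team => r; split=> [[s' [l [[s [a [Hs ->]]] [Hl ->]]]]|[s [[|a l] [Hs [//= [Hl] ->]]]]].
    + by exists s, (a :: l); rewrite /= Hl.
    + by exists (upd s y a), l; split; eauto.
Qed.

(* A choice of witnesses that depends only on the values of the variables [real]. *)
Definition choose_on {A : Type} (i : inhabited A) (X : team M) (real : list nat)
    (P : asg M -> A -> Prop) (s : asg M) : A :=
  epsilon i (fun a => exists s1, X s1 /\ seq.map (vl s1) real = seq.map (vl s) real /\ P s1 a).

Lemma choose_on_spec {A} (i : inhabited A) X real P s :
  X s -> (exists a, P s a) -> (forall s1 a, X s1 -> agree_on real s1 s -> P s1 a -> P s a) ->
  P s (choose_on i X real P s).
Proof.
  move=> Hs [a Ha] Hr; rewrite /choose_on.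
  have [|s1 [Hs1 [/agree_on_map Hm HP]]] :=
    epsilon_spec i (fun a => exists s1, X s1 /\ seq.map (vl s1) real = seq.map (vl s) real /\ P s1 a).
    by exists a, s.
  exact: Hr Hs1 Hm HP.
Qed.

Lemma choose_on_agree {A} (i : inhabited A) X real P r s :
  agree_on real r s -> choose_on i X real P r = choose_on i X real P s.
Proof. by move=> /agree_on_map H; rewrite /choose_on H. Qed.

End TeamSemantics.

(** * Environments encoded by teams *)

Section Encoding.
Context {S : signature} (M : structure S).
Notation vl := (Defs.val M).

Lemma teval_tren sg s (t : term S) :
  teval M (vl s) (tren sg t) = teval M (fun x => vl s (sg x)) t.
Proof. by elim: t => [x|f args IH] //=; congr funI; apply: functional_extensionality. Qed.

Lemma atom_aren sg s (a : atom S) :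
  atom_sat M (vl s) (aren sg a) <-> atom_sat M (fun x => vl s (sg x)) a.
Proof.
  case: a => [t u|r args] /=; first by rewrite !teval_tren.
  suff -> : (fun i => teval M (vl s) (tren sg (args i))) = (fun i => teval M (fun x => vl s (sg x)) (args i))
    by [].
  by apply: functional_extensionality => i; apply: teval_tren.
Qed.

(* A team [X] encodes at each of its assignments [s] an environment for the
   second-order formula: first-order variables are read off [s] through [sg],
   and a coded relation contains the tuples [l] whose code is [c] in the
   assignments of [X] that agree with [s] on [real] and give [ys] the values [l]. *)
Definition renv_of_team (X : team M) (real : list nat) (c : nat) (tau : nat -> nat -> relrep)
    (s : asg M) : renv M :=
  fun i n l =>
  match tau i n with
  | RConst b => b = true
  | RCode ys b => forall r, X r -> agree_on M real r s -> seq.map (vl r) ys = l -> vl r b = vl r c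
  end.

Definition fo_env (sg : nat -> nat) (s : asg M) : nat -> M := fun x => vl s (sg x).

Definition polar (pol : bool) (P : Prop) := if pol then P else ~ P.

Definition holds pol sg tau X real c (p : so S) s :=
  polar pol (ssat M (fo_env sg s) (renv_of_team X real c tau s) p).

Lemma polar_iff pol P Q : (P <-> Q) -> (polar pol P <-> polar pol Q).
Proof. by case: pol => /=; tauto. Qed.

Definition codes_ok (X : team M) (real : list nat) (tau : nat -> nat -> relrep) (k : nat) :=
  forall i n ys b, tau i n = RCode ys b ->
  [/\ size ys = n, (forall y, In y ys -> y < k), b < k,
      (forall s, X s -> forall l, size l = n ->
         exists r, X r /\ agree_on M real r s /\ seq.map (vl r) ys = l) &
      (forall r r', X r -> X r' -> agree_on M real r r' ->
         seq.map (vl r) ys = seq.map (vl r') ys -> vl r b = vl r' b)].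

Definition tr_inv (big : bool) (c : nat) (real : list nat) (sg : nat -> nat)
    (tau : nat -> nat -> relrep) (k : nat) (X : team M) :=
  [/\ In c real, (forall v, In v real -> v < k), (forall x, In (sg x) real), codes_ok X real tau k &
      (big = false -> forall i n, exists b, tau i n = RConst b)].

Definition card_mode (big : bool) :=
  if big then forall a : M, exists b, b <> a else forall a b : M, a = b.

Lemma renv_of_team_agree X real c tau s s' i n l :
  agree_on M real s s' -> (renv_of_team X real c tau s i n l <-> renv_of_team X real c tau s' i n l).
Proof.
  move=> Ha; rewrite /renv_of_team; case: (tau i n) => [//|ys b].
  by split=> H r Hr Hrs; apply: H Hr _; apply: agree_on_trans Hrs _ => //; apply: agree_on_sym.
Qed.

Lemma fo_env_agree sg real s s' :
  (forall x, In (sg x) real) -> agree_on M real s s' -> fo_env sg s = fo_env sg s'.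
Proof. by move=> Hs Ha; apply: functional_extensionality => x; apply: Ha. Qed.

Lemma holds_agree pol sg tau X real c p s s' :
  (forall x, In (sg x) real) -> agree_on M real s s' ->
  (holds pol sg tau X real c p s <-> holds pol sg tau X real c p s').
Proof.
  move=> Hs Ha; apply: polar_iff; rewrite (fo_env_agree sg real s s' Hs Ha).
  by apply: ssat_ext => // *; apply: renv_of_team_agree.
Qed.

Definition extends_below (k : nat) (X X' : team M) (real real' : list nat) :=
  (forall r', X' r' -> exists r, X r /\ forall v, v < k -> vl r' v = vl r v) /\
  (forall s' r, X' s' -> X r -> agree_on M real r s' ->
     exists r', X' r' /\ (forall v, v < k -> vl r' v = vl r v) /\ agree_on M real' r' s').

Lemma map_val_eq (r r' : asg M) ys k :
  (forall y, In y ys -> y < k) -> (forall v, v < k -> vl r v = vl r' v) ->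
  seq.map (vl r) ys = seq.map (vl r') ys.
Proof. by move=> Hy Hv; apply/eq_in_map => y /In_mem /Hy /Hv. Qed.
Arguments map_val_eq {r r' ys k}.

Lemma renv_of_team_ext k X X' real real' c tau s' i n l :
  extends_below k X X' real real' -> (forall v, In v real -> In v real') ->
  (forall v, In v real -> v < k) -> c < k -> codes_ok X real tau k -> X' s' ->
  (renv_of_team X' real' c tau s' i n l <-> renv_of_team X real c tau s' i n l).
Proof.
  move=> [Hdown Hup] Hi Hk Hc HF Hs'; rewrite /renv_of_team.
  case E: (tau i n) => [//|ys b]; case: (HF _ _ _ _ E) => _ Hys Hb _ _.
  split=> [H r Hr Har Hm|H r' Hr' Har' Hm].
  - have [r' [Hr' [He Ha']]] := Hup s' r Hs' Hr Har.
    rewrite -(He b Hb) -(He c Hc); apply: H => //.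
    by rewrite -Hm; apply: map_val_eq Hys He.
  - have [r [Hr He]] := Hdown r' Hr'.
    rewrite (He b Hb) (He c Hc); apply: H Hr _ _.
    + by move=> v Hv; rewrite -(He v (Hk v Hv)); apply: Har'; apply: Hi.
    + by rewrite -Hm; symmetry; apply: map_val_eq Hys He.
Qed.

Lemma codes_ok_ext k X X' real real' tau :
  extends_below k X X' real real' -> (forall v, In v real -> In v real') ->
  (forall v, In v real -> v < k) -> codes_ok X real tau k -> codes_ok X' real' tau k.
Proof.
  move=> [Hdown Hup] Hi Hk HF i n ys b E.
  case: (HF _ _ _ _ E) => Hsz Hys Hb Hfull Hfun; split=> //.
  - move=> s' Hs' l Hl; have [s0 [Hs0 He0]] := Hdown s' Hs'.
    have [r [Hr [Har Hm]]] := Hfull s0 Hs0 l Hl.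
    have [|r' [Hr' [He Ha']]] := Hup s' r Hs' Hr.
      by move=> v Hv; rewrite Har // He0 //; apply: Hk.
    by exists r'; split=> //; split=> //; rewrite -Hm; apply: map_val_eq Hys He.
  - move=> r1' r2' H1 H2 Ha12 Hm.
    have [r1 [Hr1 He1]] := Hdown r1' H1; have [r2 [Hr2 He2]] := Hdown r2' H2.
    rewrite (He1 b Hb) (He2 b Hb); apply: Hfun Hr1 Hr2 _ _.
    + by move=> v Hv; rewrite -He1 ?(Hk v Hv) // -He2 ?(Hk v Hv) //; apply: Ha12; apply: Hi.
    + by rewrite -(map_val_eq Hys He1) -(map_val_eq Hys He2).
Qed.

Lemma codes_ok_mono X real tau k k' : k <= k' -> codes_ok X real tau k -> codes_ok X real tau k'.
Proof.
  move=> Hk HF i n ys b /HF [Hsz Hys Hb Hfull Hfun]; split=> //; last lia.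
  by move=> y /Hys; lia.
Qed.

(* [Y] is a subteam of [X] closed under agreement on [real]: it consists of whole
   [real]-classes, so the encoded environments do not change. *)
Definition closed_sub (X Y : team M) real :=
  (forall s, Y s -> X s) /\ (forall r s, X r -> Y s -> agree_on M real r s -> Y r).

Lemma renv_of_team_sub X Y real c tau s i n l : closed_sub X Y real -> Y s ->
  (renv_of_team Y real c tau s i n l <-> renv_of_team X real c tau s i n l).
Proof.
  move=> [HYX HC] Hs; rewrite /renv_of_team; case: (tau i n) => [//|ys b].
  by split=> H r Hr Har Hm; apply: H; eauto.
Qed.

Lemma codes_ok_sub X Y real tau k : closed_sub X Y real -> codes_ok X real tau k -> codes_ok Y real tau k.
Proof.
  move=> [HYX HC] HF i n ys b /HF [Hsz Hys Hb Hfull Hfun].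
  split=> // [s Hs l Hl|r r' /HYX Hr /HYX Hr']; last exact: Hfun.
  have [r [Hr [Har Hm]]] := Hfull s (HYX s Hs) l Hl.
  by exists r; split; [apply: HC Hr Hs Har|split].
Qed.

Definition team_extend (X : team M) (R : asg M -> M -> Prop) (v : nat) : team M :=
  fun s' => exists s a, X s /\ R s a /\ s' = upd s v a.

Lemma team_extend_below k X R real :
  (forall v, In v real -> v < k) ->
  (forall r s a, X r -> X s -> agree_on M real r s -> R s a -> R r a) ->
  extends_below k X (team_extend X R k) real (k :: real).
Proof.
  move=> Hk HR; split=> [r' [s [a [Hs [Ha ->]]]]|s' r [s0 [a0 [Hs0 [Ha0 ->]]]] Hr Har].
    by exists s; split=> // v; apply: val_upd_lt.
  have Har0 : agree_on M real r s0 by move=> v Hv; rewrite Har // val_upd_lt //; apply: Hk.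
  exists (upd r k a0); split; first by exists r, a0; split=> //; split=> //; apply: HR Hs0 Har0 Ha0.
  split=> [v|v [<-|Hv]]; first exact: val_upd_lt.
  - by rewrite !val_upd Nat.eqb_refl.
  - by rewrite !val_upd_lt ?Har0 //; apply: Hk.
Qed.

End Encoding.

Arguments map_val_eq {S M r r' ys k}.
Arguments renv_of_team_ext {S M k X X' real real' c tau s' i n l}.
Arguments codes_ok_ext {S M k X X' real real' tau}.
Arguments codes_ok_mono {S M X real tau k k'}.
Arguments team_extend_below {S M k X R real}.

Section CodeTeam.
Context {S : signature} (M : structure S).
Notation vl := (Defs.val M).

Definition team_code (X : team M) (ys : list nat) (b : nat) (H : asg M -> list M -> M) : team M :=
  fun r => exists s l, X s /\ size l = size ys /\ r = upd (updl M s ys l) b (H s l).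

Variables (X : team M) (real : list nat) (k n : nat) (H : asg M -> list M -> M).
Hypothesis real_lt : forall v, In v real -> v < k.
Hypothesis H_agree :
  forall s s' l, X s -> X s' -> agree_on M real s s' -> size l = n -> H s l = H s' l.
Let ys := iota k n.
Let b := k + n.
Let ext s l := upd (updl M s ys l) b (H s l).

Lemma team_code_ext s l : X s -> size l = n -> team_code X ys b H (ext s l).
Proof. by move=> Hs Hl; exists s, l; rewrite size_iota. Qed.

Lemma team_codeP r : team_code X ys b H r -> exists s l, [/\ X s, size l = n & r = ext s l].
Proof. by move=> [s [l [Hs [Hl ->]]]]; exists s, l; rewrite size_iota in Hl. Qed.

Lemma ext_lt s l v : v < k -> vl (ext s l) v = vl s v.
Proof.
  move=> Hv; rewrite val_upd; case: (Nat.eqb_spec v b) => [Eb|_]; first by rewrite /b in Eb; lia.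
  by rewrite updl_out // => /in_iota_lt; lia.
Qed.

Lemma ext_tuple s l : size l = n -> seq.map (vl (ext s l)) ys = l.
Proof.
  move=> Hl; rewrite -[RHS](updl_map M ys s l (NoDup_iota k n)) ?size_iota //.
  apply/eq_in_map => y; rewrite mem_iota => Hy; rewrite val_upd.
  by case: (Nat.eqb_spec y b) => // Eb; rewrite /b in Eb; lia.
Qed.

Lemma ext_code s l : vl (ext s l) b = H s l.
Proof. by rewrite val_upd Nat.eqb_refl. Qed.

Lemma ext_agree s l s' l' : agree_on M real (ext s l) (ext s' l') <-> agree_on M real s s'.
Proof. by split=> Ha v Hv; move: (Ha v Hv); rewrite !ext_lt //; apply: real_lt. Qed.

Lemma team_code_below : extends_below M k X (team_code X ys b H) real real.
Proof.
  split=> [r' /team_codeP [s [l [Hs Hl ->]]]|s' r /team_codeP [s0 [l0 [Hs0 Hl0 ->]]] Hr Har].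
    by exists s; split=> // v; apply: ext_lt.
  exists (ext r l0); split; first exact: team_code_ext.
  split=> [v|]; first exact: ext_lt.
  by apply/ext_agree; apply: agree_on_trans Har _ => v /real_lt; apply: ext_lt.
Qed.

Lemma team_code_dep V : bsat M V (team_code X ys b H) (bdep (List.app real ys) b).
Proof.
  apply/bdep_sat => r r' /team_codeP [s [l [Hs Hl ->]]] /team_codeP [s' [l' [Hs' Hl' ->]]] Ha.
  have Hreal : agree_on M real (ext s l) (ext s' l') by move=> v Hv; apply: Ha; apply: in_or_app; left.
  have El : l = l'.
    rewrite -(ext_tuple s l Hl) -(ext_tuple s' l' Hl'); apply/eq_in_map => y /In_mem Hy.
    by apply: Ha; apply: in_or_app; right.
  by rewrite !ext_code El; apply: H_agree => //; apply: (proj1 (ext_agree _ _ _ _) Hreal).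
Qed.

Lemma codes_ok_code tau i :
  codes_ok M X real tau k -> codes_ok M (team_code X ys b H) real (rep_upd tau i n (RCode ys b)) b.+1.
Proof.
  move=> HF j m ys0 b0; rewrite /rep_upd.
  case E: (Nat.eqb j i && Nat.eqb m n); last first.
    move=> Eq; apply: (codes_ok_mono _ (codes_ok_ext team_code_below _ real_lt HF)) Eq => //.
    by rewrite /b; lia.
  move: E => /andP [_ /Nat.eqb_spec ->] [<- <-].
  split; first exact: size_iota.
  - by move=> y /in_iota_lt; rewrite /b; lia.
  - by [].
  - move=> s' /team_codeP [s0 [l0 [Hs0 Hl0 ->]]] l Hl.
    exists (ext s0 l); split; first exact: team_code_ext.
    by split; [apply/(ext_agree s0 l s0 l0)|apply: ext_tuple].
  - move=> r r' /team_codeP [s1 [l1 [Hs1 Hl1 ->]]] /team_codeP [s2 [l2 [Hs2 Hl2 ->]]] Ha.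
    rewrite (ext_tuple s1 l1 Hl1) (ext_tuple s2 l2 Hl2) => El; rewrite -El !ext_code.
    by apply: H_agree => //; apply: (proj1 (ext_agree _ _ _ _) Ha).
Qed.

Lemma renv_of_team_code tau c i s0 l0 j m l :
  In c real -> X s0 -> size l0 = n -> size l = m -> codes_ok M X real tau k ->
  (renv_of_team M (team_code X ys b H) real c (rep_upd tau i n (RCode ys b)) (ext s0 l0) j m l <->
   rupd (renv_of_team M X real c tau s0) i n (fun l => H s0 l = vl s0 c) j m l).
Proof.
  move=> Hc Hs0 Hl0 Hl HF; have Hck := real_lt c Hc.
  rewrite /rupd /renv_of_team /rep_upd; case E: (_ && _); last first.
    rewrite -/(renv_of_team M (team_code X ys b H) real c tau (ext s0 l0) j m l).
    rewrite (renv_of_team_ext team_code_below) //; last exact: team_code_ext.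
    rewrite -/(renv_of_team M X real c tau s0 j m l).
    by apply: renv_of_team_agree => v /real_lt; apply: ext_lt.
  move: E Hl => /andP [_ /Nat.eqb_spec ->] Hl.
  split=> [H0|H0 r /team_codeP [s1 [l1 [Hs1 Hl1 ->]]] /(ext_agree s1 l1 s0 l0) Ha].
  - have := H0 (ext s0 l) (team_code_ext s0 l Hs0 Hl)
      (proj2 (ext_agree s0 l s0 l0) (agree_on_refl _ _ _)) (ext_tuple s0 l Hl).
    by rewrite ext_code ext_lt.
  - rewrite (ext_tuple s1 l1 Hl1) => El; subst l1.
    by rewrite ext_code ext_lt // (H_agree _ _ _ Hs1 Hs0 Ha Hl1) H0 Ha.
Qed.

End CodeTeam.

(** * Correctness of the translation *)

Section Quantifiers.
Context {S : signature} (M : structure S).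
Notation vl := (Defs.val M).

Lemma bsat_bex_dep V X real k (A : bid S) :
  (forall v, In v real -> v < k) ->
  bsat M V X (bex_dep real k A) <->
  exists F : asg M -> M, (forall r s, X r -> X s -> agree_on M real r s -> F r = F s) /\
    bsat M (k :: V) (team_extend M X (fun s a => a = F s) k) A.
Proof.
  move=> Hk; have Eteam (F : asg M -> M) :
      (fun s' => exists s, X s /\ s' = upd s k (F s)) = team_extend M X (fun s a => a = F s) k.
    by apply: eq_team => s'; split=> [[s [Hs ->]]|[s [a [Hs [-> ->]]]]]; [exists s, (F s)|exists s].
  rewrite /=; split=> [[F]|[F [HF HA]]].
  - rewrite Eteam => -[Hd HA]; exists F; split=> // r s Hr Hs Ha.
    move/(bdep_sat M (k :: V)): Hd => Hd.
    have := Hd (upd r k (F r)) (upd s k (F s)); rewrite !val_upd Nat.eqb_refl; apply.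
    + by exists r.
    + by exists s.
    + by move=> v Hv; rewrite !val_upd_lt; auto.
  - exists F; rewrite Eteam; split=> //; apply/(bdep_sat M (k :: V)).
    move=> r r' [s [Hs ->]] [s' [Hs' ->]] Ha.
    rewrite !val_upd Nat.eqb_refl; apply: HF => // v Hv.
    by move: (Ha v Hv); rewrite !val_upd_lt; auto.
Qed.

Lemma eq_fun_agree X real (F : asg M -> M) :
  (forall r s, X r -> X s -> agree_on M real r s -> F r = F s) ->
  forall r s a, X r -> X s -> agree_on M real r s -> a = F s -> a = F r.
Proof. by move=> HF r s a Hr Hs Ha ->; symmetry; apply: HF. Qed.
Arguments eq_fun_agree {X real F}.

Definition tr_spec big c real sg tau k pol (phi : bid S) (p : so S) :=
  forall V X, tr_inv M big c real sg tau k X ->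
    (bsat M V X phi <-> forall s, X s -> holds M pol sg tau X real c p s).

Lemma tr_inv_extend big c real sg sg' tau k X R :
  tr_inv M big c real sg tau k X -> (forall x, In (sg' x) (k :: real)) ->
  (forall r s a, X r -> X s -> agree_on M real r s -> R s a -> R r a) ->
  tr_inv M big c (k :: real) sg' tau k.+1 (team_extend M X R k).
Proof.
  move=> [Hc Hk Hs HF Hsm] Hs' HR; split=> //; first by right.
  - by move=> v [<-|/Hk]; lia.
  - apply: (codes_ok_mono _ (codes_ok_ext (team_extend_below Hk HR) _ Hk HF)); first lia.
    by move=> v Hv; right.
Qed.
Arguments tr_inv_extend {big c real sg sg' tau k X R}.

Lemma holds_extend_env big c real sg sg' tau k X R pol p s a rho :
  tr_inv M big c real sg tau k X ->
  (forall r s a, X r -> X s -> agree_on M real r s -> R s a -> R r a) ->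
  X s -> R s a -> fo_env M sg' (upd s k a) = rho ->
  (holds M pol sg' tau (team_extend M X R k) (k :: real) c p (upd s k a) <->
   polar pol (ssat M rho (renv_of_team M X real c tau s) p)).
Proof.
  move=> [Hc Hk Hs HF Hsm] HR Hxs Hr <-; apply: polar_iff; apply: ssat_ext => // i n l _.
  rewrite (renv_of_team_ext (team_extend_below Hk HR)) //; last by exists s, a.
  - by apply: renv_of_team_agree => v Hv; apply: val_upd_lt; apply: Hk.
  - by move=> v Hv; right.
  - exact: Hk.
Qed.
Arguments holds_extend_env {big c real sg sg' tau k X R pol p s a rho}.

Lemma holds_extend big c real sg tau k X R pol p s a :
  tr_inv M big c real sg tau k X ->
  (forall r s a, X r -> X s -> agree_on M real r s -> R s a -> R r a) ->
  X s -> R s a ->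
  (holds M pol sg tau (team_extend M X R k) (k :: real) c p (upd s k a) <->
   holds M pol sg tau X real c p s).
Proof.
  move=> HI HR Hs Hr; have [_ Hk Hsg _ _] := HI.
  apply: holds_extend_env HI HR Hs Hr _.
  by apply: functional_extensionality => x; rewrite /fo_env val_upd_lt //; apply: Hk.
Qed.
Arguments holds_extend {big c real sg tau k X R pol p s a}.

Lemma holds_extend_upd big c real sg tau k X R pol p s a x :
  tr_inv M big c real sg tau k X ->
  (forall r s a, X r -> X s -> agree_on M real r s -> R s a -> R r a) ->
  X s -> R s a ->
  (holds M pol (env_upd sg x k) tau (team_extend M X R k) (k :: real) c p (upd s k a) <->
   polar pol (ssat M (fupd (fo_env M sg s) x a) (renv_of_team M X real c tau s) p)).
Proof.
  move=> HI HR Hs Hr; have [_ Hk Hsg _ _] := HI.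
  apply: holds_extend_env HI HR Hs Hr _.
  apply: functional_extensionality => y; rewrite /fo_env /env_upd /fupd.
  case: (Nat.eqb y x); first by rewrite val_upd Nat.eqb_refl.
  by rewrite val_upd_lt //; apply: Hk.
Qed.
Arguments holds_extend_upd {big c real sg tau k X R pol p s a x}.

Lemma env_upd_real sg real x k :
  (forall y, In (sg y) real) -> forall y, In (env_upd sg x k y) (k :: real).
Proof. by move=> H y; rewrite /env_upd; case: (Nat.eqb y x); [left|right]. Qed.
Arguments env_upd_real {sg real}.

Lemma ball_correct big c real sg tau k x p pol (phi : bid S) :
  tr_spec big c (k :: real) (env_upd sg x k) tau k.+1 pol phi p ->
  forall V X, tr_inv M big c real sg tau k X ->
  (bsat M V X (BAll k phi) <->
   forall s, X s -> forall a, polar pol (ssat M (fupd (fo_env M sg s) x a) (renv_of_team M X real c tau s) p)).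
Proof.
  move=> IH V X HI /=; have HR : forall r s (a : M), X r -> X s -> agree_on M real r s -> True -> True by [].
  have -> : (fun s' => exists s a, X s /\ s' = upd s k a) = team_extend M X (fun _ _ => True) k.
    by apply: eq_team => s'; split=> [[s [a [? ->]]]|[s [a [? [_ ->]]]]]; exists s, a.
  have [_ _ Hsg _ _] := HI.
  rewrite IH; last exact: (tr_inv_extend HI (env_upd_real x k Hsg) HR).
  split=> [H s Hs a|H s' [s [a [Hs [_ ->]]]]].
  - by rewrite -(holds_extend_upd HI HR Hs); [apply: H; exists s, a|].
  - by rewrite (holds_extend_upd HI HR Hs) //; apply: H.
Qed.

Lemma polar_fupd_agree big c real sg tau k X pol p x (r s : asg M) a :
  tr_inv M big c real sg tau k X -> agree_on M real r s ->
  (polar pol (ssat M (fupd (fo_env M sg r) x a) (renv_of_team M X real c tau r) p) <->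
   polar pol (ssat M (fupd (fo_env M sg s) x a) (renv_of_team M X real c tau s) p)).
Proof.
  move=> [_ _ Hsg _ _] Ha; apply: polar_iff; rewrite (fo_env_agree M sg real r s Hsg Ha).
  by apply: ssat_ext => // *; apply: renv_of_team_agree.
Qed.
Arguments polar_fupd_agree {big c real sg tau k X pol p x r s a}.

Lemma bex_dep_correct big c real sg tau k x p pol (phi : bid S) :
  tr_spec big c (k :: real) (env_upd sg x k) tau k.+1 pol phi p ->
  forall V X, tr_inv M big c real sg tau k X ->
  (bsat M V X (bex_dep real k phi) <->
   forall s, X s -> exists a, polar pol (ssat M (fupd (fo_env M sg s) x a) (renv_of_team M X real c tau s) p)).
Proof.
  move=> IH V X HI; have [_ Hk Hsg _ _] := HI.
  rewrite bsat_bex_dep //; split=> [[F [HF]]|H].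
  - rewrite IH; last exact: (tr_inv_extend HI (env_upd_real x k Hsg) (eq_fun_agree HF)).
    move=> HA s Hs; exists (F s).
    by rewrite -(holds_extend_upd HI (eq_fun_agree HF) Hs) //; apply: HA; exists s, (F s).
  - pose Q s a := polar pol (ssat M (fupd (fo_env M sg s) x a) (renv_of_team M X real c tau s) p).
    pose F := choose_on M (inhabits (pt M)) X real Q.
    have HF : forall r s, X r -> X s -> agree_on M real r s -> F r = F s.
      by move=> r s _ _ Ha; apply: choose_on_agree.
    exists F; split=> //.
    rewrite IH; last exact: (tr_inv_extend HI (env_upd_real x k Hsg) (eq_fun_agree HF)).
    move=> s' [s [_ [Hs [-> ->]]]]; rewrite (holds_extend_upd HI (eq_fun_agree HF) Hs) //.
    apply: (choose_on_spec M _ X real Q s Hs (H s Hs)) => s1 a Hs1 Ha1.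
    by rewrite /Q; move/(polar_fupd_agree HI Ha1).
Qed.

End Quantifiers.

Arguments eq_fun_agree {S M X real F}.

Arguments ball_correct {S M big c real sg tau k x p pol phi}.
Arguments bex_dep_correct {S M big c real sg tau k x p pol phi}.

Arguments tr_inv_extend {S M big c real sg sg' tau k X R}.
Arguments holds_extend_env {S M big c real sg sg' tau k X R pol p s a rho}.
Arguments holds_extend {S M big c real sg tau k X R pol p s a}.
Arguments holds_extend_upd {S M big c real sg tau k X R pol p s a x}.
Arguments env_upd_real {sg real}.
Arguments polar_fupd_agree {S M big c real sg tau k X pol p x r s a}.

Section Disjunction.
Context {S : signature} {M : structure S}.
Notation vl := (Defs.val M).

Lemma tr_inv_sub {big c real sg tau k X Y} :
  tr_inv M big c real sg tau k X -> closed_sub M X Y real -> tr_inv M big c real sg tau k Y.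
Proof. by move=> [Hc Hk Hs HF Hsm] HC; split=> //; apply: codes_ok_sub HC HF. Qed.

Lemma holds_sub {pol sg tau X Y real c p s} : closed_sub M X Y real -> Y s ->
  (holds M pol sg tau Y real c p s <-> holds M pol sg tau X real c p s).
Proof. by move=> HC Hs; apply: polar_iff; apply: ssat_ext => // *; apply: renv_of_team_sub. Qed.

Lemma holds_small {c real sg tau k X pol p} s s' :
  card_mode M false -> tr_inv M false c real sg tau k X ->
  (holds M pol sg tau X real c p s <-> holds M pol sg tau X real c p s').
Proof.
  move=> Hm [_ _ _ _ Hsm]; apply: polar_iff; apply: ssat_ext => [x _|i n l _]; first exact: Hm.
  by rewrite /renv_of_team; have [b ->] := Hsm erefl i n.
Qed.

(* In a structure with two elements a truth value is coded by an element:
   [P] holds iff its code equals [a]. *)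
Definition code_of (P : Prop) (a : M) : M :=
  if excluded_middle_informative P then a
  else epsilon (inhabits (pt M)) (fun b => b <> a).

Lemma code_ofE P a : card_mode M true -> (code_of P a = a <-> P).
Proof.
  move=> Hm; rewrite /code_of; case: excluded_middle_informative => // HP.
  by split=> // E; have := epsilon_spec (inhabits (pt M)) (fun b => b <> a) (Hm a).
Qed.

Lemma closed_sub_split {X Y Z real k c} :
  In c real -> (forall s, X s <-> Y s \/ Z s) ->
  (forall s, Y s -> vl s k = vl s c) -> (forall s, Z s -> vl s k <> vl s c) ->
  closed_sub M X Y (k :: real) /\ closed_sub M X Z (k :: real).
Proof.
  move=> Hc HU HY HZ; have same r s : agree_on M (k :: real) r s -> (vl r k = vl r c <-> vl s k = vl s c).
    by move=> Ha; rewrite (Ha k (or_introl erefl)) (Ha c (or_intror Hc)).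
  split; split=> [s Hs|r s /HU [] // Hr Hs Ha]; try by apply/HU; auto.
  - by case: (HZ r Hr); apply/(same r s Ha); apply: HY.
  - by case: (HZ s Hs); apply/(same r s Ha); apply: HY.
Qed.

Section Split.
Variables (c : nat) (real : list nat) (sg : nat -> nat) (tau : nat -> nat -> relrep).
Variables (k : nat) (pol : bool) (p q : so S) (A B : bid S).
Hypothesis IHA : tr_spec M true c (k :: real) sg tau k.+1 pol A p.
Hypothesis IHB : tr_spec M true c (k :: real) sg tau k.+1 pol B q.
Variables (V : list nat) (X : team M).
Hypothesis HI : tr_inv M true c real sg tau k X.

Lemma bsplit_sound : bsat M V X (bsplit c real k A B) ->
  forall s, X s -> holds M pol sg tau X real c p s \/ holds M pol sg tau X real c q s.
Proof.
  have [Hc Hk Hsg _ _] := HI; have Hsg' : forall x, In (sg x) (k :: real) by right.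
  rewrite bsat_bex_dep // => -[F [HF [Y [Z [HU [[HYc HA] [HZc HB]]]]]]].
  have HI1 := tr_inv_extend HI Hsg' (eq_fun_agree HF).
  have [HCY HCZ] := closed_sub_split Hc HU HYc HZc.
  have {}HA := proj1 (IHA (k :: V) Y (tr_inv_sub HI1 HCY)) HA.
  have {}HB := proj1 (IHB (k :: V) Z (tr_inv_sub HI1 HCZ)) HB.
  move=> s Hs; have Hext : team_extend M X (fun s a => a = F s) k (upd s k (F s)) by exists s, (F s).
  rewrite -!(holds_extend HI (eq_fun_agree HF) Hs (erefl (F s))).
  by case/HU: Hext => [HYs|HZs]; [left; rewrite -(holds_sub HCY HYs)|right; rewrite -(holds_sub HCZ HZs)];
    auto.
Qed.

(* [k] is set to [c] exactly on the [real]-classes where [p] holds somewhere. *)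
Lemma bsplit_complete : card_mode M true ->
  (forall s, X s -> holds M pol sg tau X real c p s \/ holds M pol sg tau X real c q s) ->
  bsat M V X (bsplit c real k A B).
Proof.
  move=> Hm H; have [Hc Hk Hsg _ _] := HI; have Hsg' : forall x, In (sg x) (k :: real) by right.
  pose F s := code_of (exists s1, X s1 /\ agree_on M real s1 s /\ holds M pol sg tau X real c p s1) (vl s c).
  have HF : forall r s, X r -> X s -> agree_on M real r s -> F r = F s.
    move=> r s _ _ Ha; rewrite /F (Ha c Hc); congr code_of; apply: propositional_extensionality.
    by split=> -[s1 [Hs1 [Ha1 Hp]]]; exists s1; split=> //; split=> //;
      apply: agree_on_trans Ha1 _ => //; apply: agree_on_sym.
  have HR := eq_fun_agree HF; have HI1 := tr_inv_extend HI Hsg' HR.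
  pose X1 := team_extend M X (fun s a => a = F s) k.
  pose Y r := X1 r /\ vl r k = vl r c; pose Z r := X1 r /\ vl r k <> vl r c.
  have HU : forall r, X1 r <-> Y r \/ Z r.
    by move=> r; split=> [Hr|[[]|[]]] //; case: (classic (vl r k = vl r c)); [left|right].
  have [HCY HCZ] := closed_sub_split (Y := Y) (Z := Z) Hc HU (fun _ => @proj2 _ _) (fun _ => @proj2 _ _).
  have code_c s : X s -> (vl (upd s k (F s)) k = vl (upd s k (F s)) c <->
      exists s1, X s1 /\ agree_on M real s1 s /\ holds M pol sg tau X real c p s1).
    by move=> Hs; rewrite val_upd Nat.eqb_refl val_upd_lt ?(Hk c) //; apply: code_ofE.
  rewrite bsat_bex_dep //; exists F; split=> //; exists Y, Z; split=> //.
  split; split=> [s []//|]; [rewrite IHA; last exact: tr_inv_sub HI1 HCY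
                            |rewrite IHB; last exact: tr_inv_sub HI1 HCZ].
  - move=> r Hr; rewrite (holds_sub HCY Hr).
    case: Hr => -[s [_ [Hs [-> ->]]]] /(code_c s Hs) [s1 [Hs1 [Ha1 Hp]]].
    by rewrite (holds_extend HI HR Hs) //; apply/(holds_agree M pol sg tau X real c p s1 s Hsg Ha1).
  - move=> r Hr; rewrite (holds_sub HCZ Hr).
    case: Hr => -[s [_ [Hs [-> ->]]]] Hcode; rewrite (holds_extend HI HR Hs) //.
    case: (H s Hs) => // Hp; case: Hcode; apply/(code_c s Hs).
    by exists s; split=> //; split=> //; apply: agree_on_refl.
Qed.

End Split.

Lemma bvee_small_correct c real sg tau k pol p q (A B : bid S) :
  card_mode M false ->
  tr_spec M false c real sg tau k pol A p -> tr_spec M false c real sg tau k pol B q ->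
  forall V X, tr_inv M false c real sg tau k X ->
  (bsat M V X (BVee A B) <->
   forall s, X s -> holds M pol sg tau X real c p s \/ holds M pol sg tau X real c q s).
Proof.
  move=> Hm IHA IHB V X HI /=; rewrite (IHA V X HI) (IHB V X HI).
  split=> [[H|H] s Hs|H]; auto.
  case: (classic (forall s, X s -> holds M pol sg tau X real c p s)) => [|Hp]; first by left.
  right=> s Hs; have [s0 Hs0] := not_all_ex_not _ _ Hp.
  have [Hs0' Hnp] : X s0 /\ ~ holds M pol sg tau X real c p s0 by tauto.
  by rewrite (holds_small s s0 Hm HI); case: (H s0 Hs0').
Qed.

Lemma bor_correct {big c real sg tau k pol p q} {Ab Bb As Bs : bid S} :
  card_mode M big ->
  tr_spec M big c (k :: real) sg tau k.+1 pol Ab p -> tr_spec M big c (k :: real) sg tau k.+1 pol Bb q ->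
  tr_spec M big c real sg tau k pol As p -> tr_spec M big c real sg tau k pol Bs q ->
  forall V X, tr_inv M big c real sg tau k X ->
  (bsat M V X (bor big c real k Ab Bb As Bs) <->
   forall s, X s -> holds M pol sg tau X real c p s \/ holds M pol sg tau X real c q s).
Proof.
  case: big => Hm HAb HBb HAs HBs V X HI; rewrite /bor.
  - by split; [apply: bsplit_sound|apply: bsplit_complete].
  - exact: bvee_small_correct Hm HAs HBs V X HI.
Qed.

End Disjunction.

Section RelationQuantifiers.
Context {S : signature} {M : structure S}.
Notation vl := (Defs.val M).

Definition holds_rel pol sg X real c tau i n (p : so S) (s : asg M) (P : list M -> Prop) :=
  polar pol (ssat M (fo_env M sg s) (rupd (renv_of_team M X real c tau s) i n P) p).

Lemma holds_rel_ext {pol sg X real c tau i n p s P1 P2} :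
  (forall l, size l = n -> (P1 l <-> P2 l)) ->
  (holds_rel pol sg X real c tau i n p s P1 <-> holds_rel pol sg X real c tau i n p s P2).
Proof.
  move=> HP; apply: polar_iff; apply: ssat_ext => // j m l Hl; rewrite /rupd.
  by case E: (_ && _) => //; move: E Hl => /andP [_ /Nat.eqb_spec ->] /HP.
Qed.

Lemma holds_rel_agree {pol sg X real c tau i n p s s' P} :
  (forall x, In (sg x) real) -> agree_on M real s s' ->
  (holds_rel pol sg X real c tau i n p s P <-> holds_rel pol sg X real c tau i n p s' P).
Proof.
  move=> Hsg Ha; apply: polar_iff; rewrite (fo_env_agree M sg real s s' Hsg Ha).
  apply: ssat_ext => // j m l Hl; apply: rupd_ext => // *; exact: renv_of_team_agree.
Qed.

Lemma tr_inv_const {big c real sg tau k X} i n b :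
  tr_inv M big c real sg tau k X -> tr_inv M big c real sg (rep_upd tau i n (RConst b)) k X.
Proof.
  move=> [Hc Hk Hs HF Hsm]; split=> // [j m ys b0|Hbig j m]; rewrite /rep_upd.
  - by case: (_ && _) => //; apply: HF.
  - by case: (_ && _); [exists b|apply: Hsm].
Qed.

Lemma holds_const pol sg tau X real c p s i n b :
  holds M pol sg (rep_upd tau i n (RConst b)) X real c p s <->
  holds_rel pol sg X real c tau i n p s (fun _ => b = true).
Proof.
  apply: polar_iff; apply: ssat_ext => // j m l _.
  by rewrite /renv_of_team /rep_upd /rupd; case: (_ && _).
Qed.

(* In a one-element structure there is a single tuple of each arity, so a
   relation is empty or full. *)
Lemma holds_rel_small pol sg X real c tau i n p s P : card_mode M false ->
  (holds_rel pol sg X real c tau i n p s P <->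
   holds_rel pol sg X real c tau i n p s (fun _ => P (nseq n (pt M)))).
Proof.
  move=> Hm; apply: holds_rel_ext => l Hl.
  suff -> : l = nseq n (pt M) by [].
  by elim: l n Hl => [|a l IH] [|n] //= [Hl]; rewrite (Hm a (pt M)) (IH n Hl).
Qed.

Lemma holds_rel_small_agree {c real sg tau k X pol i n p} s s' {P} :
  card_mode M false -> tr_inv M false c real sg tau k X ->
  (holds_rel pol sg X real c tau i n p s P <-> holds_rel pol sg X real c tau i n p s' P).
Proof.
  move=> Hm [_ _ _ _ Hsm]; apply: polar_iff; apply: ssat_ext => [x _|j m l _]; first exact: Hm.
  rewrite /rupd /renv_of_team; case: (_ && _) => //.
  by have [b ->] := Hsm erefl j m.
Qed.

Lemma holds_rel_bool pol sg X real c tau i n p s P :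
  card_mode M false ->
  (holds_rel pol sg X real c tau i n p s P <->
   if excluded_middle_informative (P (nseq n (pt M))) then
     holds_rel pol sg X real c tau i n p s (fun _ => true = true)
   else holds_rel pol sg X real c tau i n p s (fun _ => false = true)).
Proof.
  move=> Hm; rewrite holds_rel_small //.
  by case: excluded_middle_informative => HP; apply: holds_rel_ext => l _; split.
Qed.

Lemma bexR_small_correct c real sg tau k i n pol p (Ft Ff : bid S) :
  card_mode M false ->
  tr_spec M false c real sg (rep_upd tau i n (RConst true)) k pol Ft p ->
  tr_spec M false c real sg (rep_upd tau i n (RConst false)) k pol Ff p ->
  forall V X, tr_inv M false c real sg tau k X ->
  (bsat M V X (BVee Ft Ff) <-> forall s, X s -> exists P, holds_rel pol sg X real c tau i n p s P).
Proof.
  move=> Hm IHt IHf V X HI /=.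
  rewrite (IHt V X (tr_inv_const _ _ _ HI)) (IHf V X (tr_inv_const _ _ _ HI)).
  split=> [[] H s /H /holds_const HP|H]; first by eexists; exact: HP.
  by eexists; exact: HP.
  case: (classic (forall s, X s -> holds M pol sg (rep_upd tau i n (RConst true)) X real c p s)) => [|Ht];
    first by left.
  right=> s Hs; have [s0 Hs0] := not_all_ex_not _ _ Ht.
  have [Hs0' Hnt] : X s0 /\ ~ holds M pol sg (rep_upd tau i n (RConst true)) X real c p s0 by tauto.
  have [P] := H s0 Hs0'; rewrite holds_rel_bool //.
  case: (excluded_middle_informative (P (nseq n (pt M)))) => HPn HP.
    by case: Hnt; apply/holds_const.
  by apply/holds_const; apply/(holds_rel_small_agree s s0 Hm HI).
Qed.

Lemma ballR_small_correct c real sg tau k i n pol p (Ft Ff : bid S) :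
  card_mode M false ->
  tr_spec M false c real sg (rep_upd tau i n (RConst true)) k pol Ft p ->
  tr_spec M false c real sg (rep_upd tau i n (RConst false)) k pol Ff p ->
  forall V X, tr_inv M false c real sg tau k X ->
  (bsat M V X (BAnd Ft Ff) <-> forall s, X s -> forall P, holds_rel pol sg X real c tau i n p s P).
Proof.
  move=> Hm IHt IHf V X HI /=.
  rewrite (IHt V X (tr_inv_const _ _ _ HI)) (IHf V X (tr_inv_const _ _ _ HI)).
  split=> [[Ht Hf] s Hs P|H]; last by split=> s Hs; apply/holds_const; apply: H.
  rewrite holds_rel_bool //; case: (excluded_middle_informative (P (nseq n (pt M)))) => HPn.
  - by apply/holds_const; apply: Ht.
  - by apply/holds_const; apply: Hf.
Qed.

Lemma team_extend_ball_list X ys b F :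
  team_extend M (team_ball_list M X ys) (fun s a => a = F s) b =
  team_code M X ys b (fun s l => F (updl M s ys l)).
Proof.
  apply: eq_team => r; split=> [[s [_ [[s0 [l [Hs0 [Hl ->]]]] [-> ->]]]]|[s0 [l [Hs0 [Hl ->]]]]].
  - by exists s0, l.
  - by exists (updl M s0 ys l), (F (updl M s0 ys l)); split=> //; exists s0, l.
Qed.

Section Code.
Variables (c : nat) (real : list nat) (sg : nat -> nat) (tau : nat -> nat -> relrep).
Variables (k i n : nat) (pol : bool) (p : so S).
Hypothesis real_lt : forall v, In v real -> v < k.
Let ys := iota k n.
Let b := k + n.
Let tau' := rep_upd tau i n (RCode ys b).

Lemma updl_real s l v : In v real -> vl (updl M s ys l) v = vl s v.
Proof. by move=> /real_lt Hv; apply: updl_out => /in_iota_lt; lia. Qed.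

Lemma updl_agree s1 s l : size l = n -> agree_on M real s1 s ->
  agree_on M (List.app real ys) (updl M s1 ys l) (updl M s ys l).
Proof.
  move=> Hl Ha v Hv; apply in_app_or in Hv; case: Hv => Hv; first by rewrite !updl_real // Ha.
  have Hl' : size l = size ys by rewrite size_iota.
  have E : seq.map (vl (updl M s1 ys l)) ys = seq.map (vl (updl M s ys l)) ys
    by rewrite !updl_map //; apply: NoDup_iota.
  by move/eq_in_map: E => E; apply: E; apply/In_mem.
Qed.

Lemma real_ys_lt v : In v (List.app real ys) -> v < b.
Proof. by move=> Hv; apply in_app_or in Hv; case: Hv => [/real_lt|/in_iota_lt]; rewrite /b; lia. Qed.

Hypothesis Hc : In c real.
Hypothesis Hsg : forall x, In (sg x) real.

Section Uniform.
Variables (X : team M) (H : asg M -> list M -> M).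
Hypothesis H_agree :
  forall s s' l, X s -> X s' -> agree_on M real s s' -> size l = n -> H s l = H s' l.

Lemma tr_inv_code : codes_ok M X real tau k -> tr_inv M true c real sg tau' b.+1 (team_code M X ys b H).
Proof.
  move=> HF; split=> //; first by move=> v /real_lt; rewrite /b; lia.
  exact: codes_ok_code.
Qed.

Lemma holds_code s0 l0 : codes_ok M X real tau k -> X s0 -> size l0 = n ->
  (holds M pol sg tau' (team_code M X ys b H) real c p (upd (updl M s0 ys l0) b (H s0 l0)) <->
   holds_rel pol sg X real c tau i n p s0 (fun l => H s0 l = vl s0 c)).
Proof.
  move=> HF Hs0 Hl0; apply: polar_iff; apply: ssat_ext => [x _|j m l Hl].
  - by rewrite /fo_env; apply: ext_lt => //; apply: real_lt.
  - exact: renv_of_team_code.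
Qed.

Lemma bsat_team_code (Fb : bid S) V :
  tr_spec M true c real sg tau' b.+1 pol Fb p -> codes_ok M X real tau k ->
  (bsat M V (team_code M X ys b H) Fb <->
   forall s, X s -> holds_rel pol sg X real c tau i n p s (fun l => H s l = vl s c)).
Proof.
  move=> IH HF; rewrite IH; last exact: tr_inv_code.
  split=> [Hall s Hs|Hall r /team_codeP [s [l [Hs Hl ->]]]] //.
  - have Hn : size (nseq n (pt M)) = n by rewrite size_nseq.
    by rewrite -(holds_code s (nseq n (pt M)) HF Hs Hn); apply: Hall; apply: team_code_ext.
  - by rewrite holds_code //; apply: Hall.
Qed.

End Uniform.

Lemma bexR_big_correct (Fb : bid S) :
  card_mode M true -> tr_spec M true c real sg tau' b.+1 pol Fb p ->
  forall V X, codes_ok M X real tau k ->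
  (bsat M V X (ball_list ys (bex_dep (List.app real ys) b Fb)) <->
   forall s, X s -> exists P, holds_rel pol sg X real c tau i n p s P).
Proof.
  move=> Hm IH V X HF; rewrite bsat_ball_list bsat_bex_dep; last exact: real_ys_lt.
  split=> [[F [HFu]]|Hall].
  - rewrite team_extend_ball_list bsat_team_code //.
    + by move=> HP s Hs; eexists; apply: HP.
    + move=> s s' l Hs Hs' Ha Hl; apply: HFu; try exact: updl_agree.
      * by exists s, l; rewrite size_iota.
      * by exists s', l; rewrite size_iota.
  - pose Pk := choose_on M (inhabits (fun _ : list M => True)) X real (holds_rel pol sg X real c tau i n p).
    pose F r := code_of (Pk r (seq.map (vl r) ys)) (vl r c).
    have HFu r r' : agree_on M (List.app real ys) r r' -> F r = F r'.
      move=> Ha; have Hr : agree_on M real r r' by move=> v Hv; apply: Ha; apply: in_or_app; left.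
      rewrite /F /Pk (choose_on_agree M _ _ _ _ _ _ Hr) (Hr c Hc); congr (code_of (_ _) _).
      by apply/eq_in_map => y /In_mem Hy; apply: Ha; apply: in_or_app; right.
    have FE s l : size l = n -> F (updl M s ys l) = code_of (Pk s l) (vl s c).
      move=> Hl; have Hag : agree_on M real (updl M s ys l) s by move=> v; apply: updl_real.
      rewrite /F updl_map ?size_iota //; last exact: NoDup_iota.
      by rewrite /Pk (choose_on_agree M _ _ _ _ _ _ Hag) (Hag c Hc).
    exists F; split=> [r r' _ _|]; first exact: HFu.
    rewrite team_extend_ball_list bsat_team_code //; last first.
      by move=> s s' l _ _ Ha Hl; apply: HFu; apply: updl_agree.
    move=> s Hs; rewrite (holds_rel_ext (P2 := Pk s)); last first.
      by move=> l Hl; rewrite FE // code_ofE.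
    apply: (choose_on_spec M _ X real _ s Hs (Hall s Hs)) => s1 P Hs1 Ha1.
    by move/(holds_rel_agree Hsg Ha1).
Qed.

Lemma dep_subteam_code V X Y :
  (forall r, Y r -> exists s a, team_ball_list M X ys s /\ r = upd s b a) ->
  bsat M V Y (bdep (List.app real ys) b) ->
  exists H, (forall s s' l, X s -> X s' -> agree_on M real s s' -> size l = n -> H s l = H s' l) /\
    forall r, Y r -> team_code M X ys b H r.
Proof.
  move=> HY /bdep_sat Hdep.
  have row_agree s l a : agree_on M (List.app real ys) (upd (updl M s ys l) b a) (updl M s ys l).
    by move=> v /real_ys_lt Hv; apply: val_upd_lt.
  pose Spec s l a := size l = n ->
    forall r0, Y r0 -> agree_on M (List.app real ys) r0 (updl M s ys l) -> vl r0 b = a.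
  pose H s l := choose_on M (inhabits (pt M)) X real (fun s a => Spec s l a) s.
  have HSpec s l : X s -> Spec s l (H s l).
    move=> Hs; apply: (choose_on_spec M _ X real (fun s a => Spec s l a) s Hs)
      => [|s1 a Hs1 Ha HS1 Hl r0 Hr0 Ha0].
      case: (classic (exists r0, Y r0 /\ agree_on M (List.app real ys) r0 (updl M s ys l)))
        => [[r0 [Hr0 Ha0]]|Hn]; last by exists (pt M) => _ r0 Hr0 Ha0; case: Hn; exists r0.
      exists (vl r0 b) => _ r1 Hr1 Ha1.
      by apply: Hdep => //; apply: agree_on_trans Ha1 _; apply: agree_on_sym.
    apply: (HS1 Hl r0 Hr0).
    by apply: agree_on_trans Ha0 _; apply: updl_agree => //; apply: agree_on_sym.
  exists H; split=> [s s' l _ _ Ha _|r Hr]; first exact: choose_on_agree.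
  have [_ [a [[s0 [l [Hs0 [Hl ->]]]] Er]]] := HY r Hr; subst r.
  rewrite size_iota in Hl; exists s0, l; split=> //; split; first by rewrite size_iota.
  have := HSpec s0 l Hs0 Hl _ Hr (row_agree s0 l a).
  by rewrite val_upd Nat.eqb_refl => ->.
Qed.

Lemma ballR_big_correct (Fb : bid S) :
  card_mode M true -> lolli_free Fb -> tr_spec M true c real sg tau' b.+1 pol Fb p ->
  forall V X, codes_ok M X real tau k ->
  (bsat M V X (ball_list ys (BAll b (BImp (bdep (List.app real ys) b) Fb))) <->
   forall s, X s -> forall P, holds_rel pol sg X real c tau i n p s P).
Proof.
  move=> Hm HLF IH V X HF; rewrite bsat_ball_list /=.
  split=> [Hall s Hs P|Hall Y HY HdY].
  - pose H s l := code_of (P l) (vl s c).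
    have H_agree s1 s2 l : X s1 -> X s2 -> agree_on M real s1 s2 -> size l = n -> H s1 l = H s2 l.
      by move=> _ _ Ha _; rewrite /H (Ha c Hc).
    have HT : bsat M (b :: rev_append ys V) (team_code M X ys b H) Fb.
      apply: Hall; last exact: team_code_dep.
      by move=> _ [s0 [l [Hs0 [Hl ->]]]]; exists (updl M s0 ys l), (H s0 l); split=> //; exists s0, l.
    move/(bsat_team_code _ _ H_agree _ _ IH HF): HT => /(_ s Hs) HT.
    by apply: (proj1 (holds_rel_ext _) HT) => l _; rewrite code_ofE.
  - have [H [H_agree HYH]] := dep_subteam_code (b :: rev_append ys V) _ _ HY HdY.
    apply: (bsat_downward M _ _ _ _ HLF _ HYH).
    by apply/(bsat_team_code _ _ H_agree _ _ IH HF) => s Hs; apply: Hall.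
Qed.

End Code.

Lemma bexR_correct {big c real sg tau k i n pol p} {Fb Ft Ff : bid S} :
  card_mode M big ->
  tr_spec M big c real sg (rep_upd tau i n (RCode (iota k n) (k + n))) (k + n).+1 pol Fb p ->
  tr_spec M big c real sg (rep_upd tau i n (RConst true)) k pol Ft p ->
  tr_spec M big c real sg (rep_upd tau i n (RConst false)) k pol Ff p ->
  forall V X, tr_inv M big c real sg tau k X ->
  (bsat M V X (bexR big real k n Fb Ft Ff) <-> forall s, X s -> exists P, holds_rel pol sg X real c tau i n p s P).
Proof.
  case: big => Hm IHb IHt IHf V X HI; rewrite /bexR.
  - by case: HI => Hc Hk Hsg HF _; apply: bexR_big_correct.
  - exact: bexR_small_correct Hm IHt IHf V X HI.
Qed.

Lemma ballR_correct {big c real sg tau k i n pol p} {Fb Ft Ff : bid S} :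
  card_mode M big -> lolli_free Fb ->
  tr_spec M big c real sg (rep_upd tau i n (RCode (iota k n) (k + n))) (k + n).+1 pol Fb p ->
  tr_spec M big c real sg (rep_upd tau i n (RConst true)) k pol Ft p ->
  tr_spec M big c real sg (rep_upd tau i n (RConst false)) k pol Ff p ->
  forall V X, tr_inv M big c real sg tau k X ->
  (bsat M V X (ballR big real k n Fb Ft Ff) <-> forall s, X s -> forall P, holds_rel pol sg X real c tau i n p s P).
Proof.
  case: big => Hm HLF IHb IHt IHf V X HI; rewrite /ballR.
  - by case: HI => Hc Hk Hsg HF _; apply: ballR_big_correct.
  - exact: ballR_small_correct Hm IHt IHf V X HI.
Qed.

End RelationQuantifiers.

Section Correctness.
Context {S : signature} {M : structure S}.
Notation vl := (Defs.val M).

Lemma map_nth_ord n (f : 'I_n -> M) (g : nat -> M) (ys : list nat) : size ys = n ->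
  (seq.map g ys = [seq f j | j <- enum 'I_n] <-> forall j : 'I_n, g (seq.nth 0 ys j) = f j).
Proof.
  move=> Hs; split=> [E j|H].
  - have := congr1 (fun s => seq.nth (pt M) s j) E => /=.
    by rewrite (nth_map 0) ?Hs // (nth_map j) ?size_enum_ord // nth_ord_enum.
  - apply: (@eq_from_nth _ (pt M)) => [|j]; first by rewrite size_map size_map size_enum_ord.
    rewrite size_map Hs => Hj; rewrite (nth_map 0) ?Hs // (nth_map (Ordinal Hj)) ?size_enum_ord //.
    have -> : seq.nth (Ordinal Hj) (enum 'I_n) j = Ordinal Hj
      by apply: (nth_ord_enum (Ordinal Hj) (Ordinal Hj)).
    exact: (H (Ordinal Hj)).
Qed.

Lemma bconj_query_sat {sg} {ys : list nat} {n} {args : 'I_n -> term S} {r} : size ys = n ->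
  (forall l, In l [seq LPos (AEq (Var (seq.nth 0 ys j)) (tren sg (args j))) | j : 'I_n <- enum 'I_n] ->
     lit_sat M (vl r) l) <->
  seq.map (vl r) ys = [seq teval M (fo_env M sg r) (args j) | j <- enum 'I_n].
Proof.
  move=> Hs; rewrite (map_nth_ord _ (fun j => teval M (fo_env M sg r) (args j))) //.
  split=> [H j|H l /in_map_iff [j [<- _]] /=]; last by rewrite teval_tren H.
  have := H (LPos (AEq (Var (seq.nth 0 ys j)) (tren sg (args j)))).
  rewrite /= teval_tren; apply; apply/in_map_iff; exists j; split=> //.
  by apply/In_mem; rewrite mem_enum.
Qed.

Lemma rel_query_correct {big c real sg tau k X V i n ys b} {args : 'I_n -> term S} {pol} :
  tr_inv M big c real sg tau k X -> tau i n = RCode ys b ->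
  (bsat M V X (rel_query c sg ys b n args pol) <->
   forall s, X s ->
     polar pol (renv_of_team M X real c tau s i n [seq teval M (fo_env M sg s) (args j) | j <- enum 'I_n])).
Proof.
  move=> [Hc Hk Hsg HF _] E; have [Hsz Hys Hb Hfull Hfun] := HF _ _ _ _ E.
  rewrite /rel_query bimp_bconj_sat /renv_of_team E.
  pose L r := [seq teval M (fo_env M sg r) (args j) | j <- enum 'I_n].
  have HL r s : agree_on M real r s -> L r = L s by move=> Ha; rewrite /L (fo_env_agree M sg real r s Hsg Ha).
  split=> [H s Hs|H r Hr /(bconj_query_sat Hsz) Hq].
  - case: pol H => /= H.
    + move=> r Hr Ha Hm; apply: (H r Hr); apply/bconj_query_sat => //.
      by rewrite Hm; symmetry; apply: HL.
    + move=> HG; have [|r [Hr [Ha Hm]]] := Hfull s Hs (L s); first by rewrite size_map size_enum_ord.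
      apply: (H r Hr); last by apply: HG.
      by apply/bconj_query_sat => //; rewrite Hm; apply: HL; apply: agree_on_sym.
  - case: pol H => /= H; first exact: (H r Hr r Hr (agree_on_refl _ _ _) Hq).
    move=> Heq; apply: (H r Hr) => r' Hr' Ha Hm.
    rewrite (Hfun r' r Hr' Hr Ha); last by rewrite Hm Hq.
    by rewrite Heq (Ha c Hc).
Qed.

Lemma lolli_free_translate (psi : so S) big c real sg tau k pol :
  lolli_free (translate big c real sg tau k pol psi).
Proof.
  have ball_list_lolli ys (p : bid S) : lolli_free p -> lolli_free (ball_list ys p) by elim: ys => //= *; auto.
  elim: psi big c real sg tau k pol => [a|i n args|p IH|p IHp q IHq|p IHp q IHq|x p IH|x p IH|i n p IH|i n p IH]
    big c real sg tau k pol /=; try case: pol => //=; try case: big => //=; auto.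
  all: try by case: (tau i n) => [b'|ys b'] //; case: (Bool.eqb b' _).
  all: by apply: ball_list_lolli.
Qed.

Lemma all_iff (X : team M) (A B : asg M -> Prop) :
  (forall s, X s -> (A s <-> B s)) -> ((forall s, X s -> A s) <-> (forall s, X s -> B s)).
Proof. by move=> H; split=> H' s Hs; apply/(H s Hs); apply: H'. Qed.

Lemma translate_rvar_correct big c real sg tau k i n (args : 'I_n -> term S) pol V X :
  tr_inv M big c real sg tau k X ->
  (bsat M V X (translate big c real sg tau k pol (SRVar i n args)) <->
   forall s, X s -> holds M pol sg tau X real c (SRVar i n args) s).
Proof.
  move=> HI /=; case E: (tau i n) => [b|ys b]; last first.
    rewrite (rel_query_correct HI E); apply: all_iff => s _.
    by rewrite /holds /= /renv_of_team E.
  rewrite /holds /= /renv_of_team E.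
  by case: b E pol => _ [] /=; firstorder.
Qed.

Lemma holds_not pol sg tau X real c p s :
  holds M (negb pol) sg tau X real c p s <-> holds M pol sg tau X real c (SNot p) s.
Proof.
  rewrite /holds; case: pol => /=; first tauto.
  by split=> [H Hn|/NNPP //]; apply: Hn.
Qed.

Theorem translate_correct (psi : so S) big c real sg tau k pol :
  card_mode M big -> tr_spec M big c real sg tau k pol (translate big c real sg tau k pol psi) psi.
Proof.
  elim: psi big c real sg tau k pol => [a|i n args|p IH|p IHp q IHq|p IHp q IHq|x p IH|x p IH|i n p IH|i n p IH]
    big c real sg tau k pol Hm V X HI; simpl translate.
  - by apply: all_iff => s _; case: pol => /=; rewrite atom_aren.
  - exact: (translate_rvar_correct _ _ _ _ _ _ _ _ _ _ _ _ HI).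
  - rewrite (IH _ _ _ _ _ _ _ Hm V X HI); apply: all_iff => s _; exact: holds_not.
  - case: pol => /=.
    + rewrite (IHp _ _ _ _ _ _ _ Hm V X HI) (IHq _ _ _ _ _ _ _ Hm V X HI) /holds /=.
      split=> [[Hp Hq] s Hs|H]; first by split; [apply: Hp|apply: Hq].
      by split=> s /H [].
    + rewrite (bor_correct Hm (IHp _ _ _ _ _ _ _ Hm) (IHq _ _ _ _ _ _ _ Hm)
                 (IHp _ _ _ _ _ _ _ Hm) (IHq _ _ _ _ _ _ _ Hm) V X HI).
      by apply: all_iff => s _; rewrite /holds /=; split=> [[]|/not_and_or]; tauto.
  - case: pol => /=.
    + rewrite (bor_correct Hm (IHp _ _ _ _ _ _ _ Hm) (IHq _ _ _ _ _ _ _ Hm)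
                 (IHp _ _ _ _ _ _ _ Hm) (IHq _ _ _ _ _ _ _ Hm) V X HI).
      by apply: all_iff.
    + rewrite (IHp _ _ _ _ _ _ _ Hm V X HI) (IHq _ _ _ _ _ _ _ Hm V X HI) /holds /=.
      split=> [[Hp Hq] s Hs|H]; first by have := Hp s Hs; have := Hq s Hs; tauto.
      by split=> s /H; tauto.
  - case: pol.
    + by rewrite (bex_dep_correct (IH _ _ _ _ _ _ _ Hm) V X HI).
    + rewrite (ball_correct (IH _ _ _ _ _ _ _ Hm) V X HI); apply: all_iff => s _ /=.
      by split=> [H [a]|H a Ha]; [apply: H|apply: H; exists a].
  - case: pol.
    + by rewrite (ball_correct (IH _ _ _ _ _ _ _ Hm) V X HI).
    + rewrite (bex_dep_correct (IH _ _ _ _ _ _ _ Hm) V X HI); apply: all_iff => s _ /=.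
      by split=> [[a Ha] H|/not_all_ex_not [a Ha]]; [apply: Ha|exists a].
  - case: pol.
    + by rewrite (bexR_correct Hm (IH _ _ _ _ _ _ _ Hm) (IH _ _ _ _ _ _ _ Hm) (IH _ _ _ _ _ _ _ Hm) V X HI).
    + rewrite (ballR_correct Hm (lolli_free_translate _ _ _ _ _ _ _ _) (IH _ _ _ _ _ _ _ Hm)
                 (IH _ _ _ _ _ _ _ Hm) (IH _ _ _ _ _ _ _ Hm) V X HI); apply: all_iff => s _ /=.
      by split=> [H [P]|H P HP]; [apply: H|apply: H; exists P].
  - case: pol.
    + by rewrite (ballR_correct Hm (lolli_free_translate _ _ _ _ _ _ _ _) (IH _ _ _ _ _ _ _ Hm)
                   (IH _ _ _ _ _ _ _ Hm) (IH _ _ _ _ _ _ _ Hm) V X HI).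
    + rewrite (bexR_correct Hm (IH _ _ _ _ _ _ _ Hm) (IH _ _ _ _ _ _ _ Hm) (IH _ _ _ _ _ _ _ Hm) V X HI).
      apply: all_iff => s _ /=.
      by split=> [[P HP] H|/not_all_ex_not [P HP]]; [apply: HP|exists P].
Qed.

End Correctness.

Section Sentence.
Context {S : signature} {M : structure S}.
Notation vl := (Defs.val M).

Lemma bsingleton_sat V Y : (exists s, Y s) -> (bsat M V Y (@bsingleton S) <-> forall a b : M, a = b).
Proof.
  move=> [s0 Hs0] /=; split=> [H a b|H s _]; last exact: H.
  have := H (upd (upd s0 3 a) 4 b); rewrite /= /tv /= !val_upd /=; apply.
  by exists (upd s0 3 a), b; split=> //; exists s0, a.
Qed.

Definition team_c : team M := fun s' => exists s a, empty_team M s /\ s' = upd s 2 a.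

Lemma team_c_inhabited : exists s, team_c s.
Proof. by exists (upd (fun _ => None) 2 (pt M)), (fun _ => None), (pt M). Qed.

Lemma tr_inv_init big :
  card_mode M big -> tr_inv M big 2 [:: 2] (fun _ => 2) (fun _ _ => RConst false) 3 team_c.
Proof.
  split=> //=; [left|move=> v [<-|[]]|left|move=> _ i n; exists false] => //; lia.
Qed.

Lemma bsat_translate_init big (psi : so S) : so_sentence psi -> card_mode M big ->
  (bsat M [:: 2] team_c (translate_top big psi) <-> so_models M psi).
Proof.
  move=> [Hfree _] Hm; rewrite (translate_correct _ _ _ _ _ _ _ _ Hm _ _ (tr_inv_init _ Hm)).
  have E s : holds M true (fun _ => 2) (fun _ _ => RConst false) team_c [:: 2] 2 psi s <-> so_models M psi.
    by apply: ssat_ext => [x /Hfree|i n l _].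
  have [s0 Hs0] := team_c_inhabited.
  by split=> [/(_ s0 Hs0)/E|H s _]; last apply/E.
Qed.

End Sentence.

Theorem bid_of_so_correct {S : signature} (M : structure S) (psi : so S) :
  so_sentence psi -> (bid_models M (bid_of_so psi) <-> so_models M psi).
Proof.
  move=> Hpsi; have Hne := @team_c_inhabited _ M.
  have bsat_or V X (A B : bid S) : bsat M V X (BVee A B) <-> bsat M V X A \/ bsat M V X B by [].
  have bsat_and V X (A B : bid S) : bsat M V X (BAnd A B) <-> bsat M V X A /\ bsat M V X B by [].
  change (bsat M [:: 2] team_c (BVee (BAnd bsingleton (translate_top false psi))
                                     (BAnd (BImp bsingleton BBot) (translate_top true psi)))
          <-> so_models M psi).
  rewrite bsat_or !bsat_and bsingleton_sat //.
  case: (classic (forall a b : M, a = b)) => Hsmall.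
  - rewrite (bsat_translate_init false psi Hpsi Hsmall).
    split=> [[[_ //]|[Hbig _]]|H]; last by left.
    have [s Hs] := Hne; case: (Hbig team_c (fun _ h => h) _ s Hs).
    exact (proj2 (bsingleton_sat [:: 2] team_c Hne) Hsmall).
  - have Hbig : card_mode M true.
      move=> a; apply: NNPP => Hn; apply: Hsmall => x y.
      by have [-> ->] : x = a /\ y = a by split; apply: NNPP => Hxa; apply: Hn; eexists; exact: Hxa.
    rewrite (bsat_translate_init true psi Hpsi Hbig).
    split=> [[[Hs1 _]|[_ H]] //|H].
    right; split=> // Y HY HsY s Hs.
    by apply: Hsmall; exact (proj1 (bsingleton_sat [:: 2] _ (ex_intro _ s Hs)) HsY).
Qed.

Theorem lemma5p7 (S : signature) (psi : so S) :
  so_sentence psi ->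
  exists phi : bid S, bid_sentence phi /\
    forall M : structure S, so_models M psi <-> bid_models M phi.
Proof.
  move=> Hpsi; exists (bid_of_so psi); split; first exact: bid_of_so_sentence.
  by move=> M; rewrite bid_of_so_correct.
Qed.
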